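(* Under the hypotheses of Theorem 4.1 (with $\Lambda=(\lambda_1,\dots,\lambda_n)$, $P$, $v_0$, $R$, $\theta$, $a^0$ as there), let $v^\epsilon(t)$ be the solution of $\dot v_j+\mathbf{i}\lambda_jv_j=\epsilon P_j(v)$, $1\le j\le n$, $v(0)=v_0$. Then for every $j$, $$\sup_{|t|\le\epsilon^{-1}\theta}\big||v^\epsilon_j(t)|-|a^0_j(\epsilon t)|\big|\to0\quad\text{as }\epsilon\to0.$$
   Context: Theorem 4.1 setting: $\Lambda\in(\mathbb{R}\setminus\{0\})^n$; $P\in\mathrm{Lip}_{\mathcal{X}}(\mathbb{C}^n,\mathbb{C}^n)$, i.e. $P$ is continuous with $\sup_{B_r}|P|\le\mathcal{X}(r)$ and $\mathrm{Lip}(P|_{B_r})\le\mathcal{X}(r)$ for all $r\ge0$, for a non-decreasing continuous $\mathcal{X}:\mathbb{R}_+\to\mathbb{R}_+$; $|v_0|=R>0$, $\mathcal{X}(2R)>0$, $\theta=R/\mathcal{X}(2R)$; $a^0$ is the solution on $[-\theta,\theta]$ of $\partial_\tau a=\langle\langle P\rangle\rangle(a)$, $a(0)=v_0$, where $\langle\langle P\rangle\rangle(a)=\lim_{T\to\pm\infty}\frac1{|T|}\int_0^T\Phi_{\Lambda t}P(\Phi_{-\Lambda t}a)\,dt$ and $\Phi_w=\mathrm{diag}(e^{\mathbf{i}w_j})$. *)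

From Stdlib Require Import Reals.
Open Scope R_scope.

Definition Cx : Type := (R * R)%type.
Definition Cre (z : Cx) : R := fst z.
Definition Cim (z : Cx) : R := snd z.
Definition C0 : Cx := (0, 0).
Definition Cadd (z w : Cx) : Cx := (fst z + fst w, snd z + snd w).
Definition Csub (z w : Cx) : Cx := (fst z - fst w, snd z - snd w).
Definition Cmul (z w : Cx) : Cx :=
  (fst z * fst w - snd z * snd w, fst z * snd w + snd z * fst w).
Definition Cscale (r : R) (z : Cx) : Cx := (r * fst z, r * snd z).
Definition Cexpi (t : R) : Cx := (cos t, sin t).
Definition Cnorm (z : Cx) : R := sqrt (fst z ^ 2 + snd z ^ 2).

(* ---------- vectors of Cx^n, represented as nat -> Cx (only j < n matter) ---------- *)
Fixpoint sumR (n : nat) (f : nat -> R) : R :=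
  match n with O => 0 | S k => sumR k f + f k end.

Definition vnorm (n : nat) (v : nat -> Cx) : R :=
  sqrt (sumR n (fun j => Cnorm (v j) ^ 2)).
Definition vsub (u v : nat -> Cx) : nat -> Cx := fun j => Csub (u j) (v j).

Definition PhiL (Lam : nat -> R) (t : R) (v : nat -> Cx) : nat -> Cx :=
  fun j => Cmul (Cexpi (Lam j * t)) (v j).

Definition admissible_X (X : R -> R) : Prop :=
  (forall r, 0 <= r -> 0 <= X r) /\
  (forall r s, 0 <= r -> r <= s -> X r <= X s) /\
  (forall r, 0 <= r -> forall e, 0 < e -> exists d, 0 < d /\
      forall s, 0 <= s -> Rabs (s - r) < d -> Rabs (X s - X r) < e).

Definition Lip_X (n : nat) (X : R -> R) (P : (nat -> Cx) -> (nat -> Cx)) : Prop :=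
  (forall u e, 0 < e -> exists d, 0 < d /\
      forall w, vnorm n (vsub w u) < d -> vnorm n (vsub (P w) (P u)) < e) /\
  (forall r, 0 <= r -> forall v, vnorm n v <= r -> vnorm n (P v) <= X r) /\
  (forall r, 0 <= r -> forall u v, vnorm n u <= r -> vnorm n v <= r ->
      vnorm n (vsub (P u) (P v)) <= X r * vnorm n (vsub u v)).

Definition cont_on (n : nat) (f : R -> nat -> Cx) (a b : R) : Prop :=
  forall t, a <= t <= b -> forall e, 0 < e -> exists d, 0 < d /\
    forall s, a <= s <= b -> Rabs (s - t) < d -> vnorm n (vsub (f s) (f t)) < e.

Definition deriv_at (n : nat) (f : R -> nat -> Cx) (t : R) (g : nat -> Cx) : Prop :=
  forall j, (j < n)%nat ->
    derivable_pt_lim (fun s => Cre (f s j)) t (Cre (g j)) /\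
    derivable_pt_lim (fun s => Cim (f s j)) t (Cim (g j)).

(* w_j = lim_{T -> +oo} (1/T) int_0^T (Phi_{Lambda t} P(Phi_{-Lambda t} a))_j dt,
   where the integral int_0^T g is written as G(T), G the primitive of the
   (continuous) integrand g with G(0) = 0. *)
Definition is_resonant_avg (n : nat) (Lam : nat -> R) (P : (nat -> Cx) -> (nat -> Cx))
    (a w : nat -> Cx) : Prop :=
  forall j, (j < n)%nat ->
    let g := fun t => PhiL Lam t (P (PhiL Lam (- t) a)) j in
    exists G : R -> Cx, G 0 = C0 /\
      (forall t, derivable_pt_lim (fun s => Cre (G s)) t (Cre (g t)) /\
                 derivable_pt_lim (fun s => Cim (G s)) t (Cim (g t))) /\
      (forall e, 0 < e -> exists T0, forall T, T0 < T ->
          Cnorm (Csub (Cscale (/ T) (G T)) (w j)) < e).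

Definition solves_effective (n : nat) (Lam : nat -> R) (P : (nat -> Cx) -> (nat -> Cx))
    (v0 : nat -> Cx) (th : R) (a : R -> nat -> Cx) : Prop :=
  (forall j, (j < n)%nat -> a 0 j = v0 j) /\
  cont_on n a (- th) th /\
  (forall tau, - th < tau < th ->
     exists w, is_resonant_avg n Lam P (a tau) w /\ deriv_at n a tau w).

Definition solves_eps (n : nat) (Lam : nat -> R) (P : (nat -> Cx) -> (nat -> Cx))
    (eps : R) (v0 : nat -> Cx) (T : R) (v : R -> nat -> Cx) : Prop :=
  (forall j, (j < n)%nat -> v 0 j = v0 j) /\
  cont_on n v (- T) T /\
  (forall t, - T < t < T ->
     deriv_at n v t
       (fun j => Cadd (Cmul (0, - Lam j) (v t j)) (Cscale eps (P (v t) j)))).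

From Stdlib Require Import Reals Lra Lia FunctionalExtensionality Classical ClassicalEpsilon ZArith.
From Coquelicot Require Import Coquelicot.
Open Scope R_scope.

(* In the interaction representation a(t) = Phi_{Lambda t} v(t) the
   equation becomes the slow equation a' = eps Y(t, a), with
   Y(t, x) = Phi_{Lambda t} P(Phi_{-Lambda t} x), and the rotations preserve
   each |v_j|. It therefore suffices to show sup |a(t) - a0(eps t)| -> 0.
   - A priori bound (continuous induction): a and a0 stay in the ball of
     radius 2 Rad, where P is bounded and Lipschitz with constant K = X(2 Rad).
   - Averaging estimate (forward in time): on a grid of N cells of slow length
     h, freeze the field at a0(k h), replace it by its long-time mean W(k h) =
     a0'(k h), and sum the cell errors with a discrete Gronwall inequality.
   - Backward in time, the same estimate applies to the reflected system; the
     needed backward means equal the forward ones because Y(., b) is almost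
     periodic (simultaneous Dirichlet approximation of the frequencies).
   - Existence comes from Picard iteration for the field truncated outside the
     ball, which the a priori bound shows is never felt. *)

Definition vsq (n : nat) (v : nat -> Cx) : R :=
  sumR n (fun j => fst (v j) ^ 2 + snd (v j) ^ 2).
Definition ip (n : nat) (u v : nat -> Cx) : R :=
  sumR n (fun j => fst (u j) * fst (v j) + snd (u j) * snd (v j)).
Definition vadd (u v : nat -> Cx) : nat -> Cx := fun j => Cadd (u j) (v j).
Definition vscale (r : R) (v : nat -> Cx) : nat -> Cx := fun j => Cscale r (v j).
Definition vzero : nat -> Cx := fun _ => C0.

Ltac vring := let j := fresh "j" in apply functional_extensionality; intro j;
  unfold vsub, vadd, vscale, vzero, Csub, Cadd, Cscale, C0, PhiL, Cmul;
  apply injective_projections; simpl; ring.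

Lemma sumR_ext n f g : (forall j, (j < n)%nat -> f j = g j) -> sumR n f = sumR n g.
Proof.
  induction n; simpl; intros H; auto.
  rewrite IHn by (intros; apply H; lia). rewrite H by lia. auto.
Qed.

Lemma sumR_le n f g : (forall j, (j < n)%nat -> f j <= g j) -> sumR n f <= sumR n g.
Proof.
  induction n; simpl; intros H; [lra|].
  assert (sumR n f <= sumR n g) by (apply IHn; intros; apply H; lia).
  assert (f n <= g n) by (apply H; lia). lra.
Qed.

Lemma sumR_const n c : sumR n (fun _ => c) = INR n * c.
Proof. induction n; simpl sumR; [simpl; lra|]. rewrite IHn, S_INR. lra. Qed.

Lemma sumR_nonneg n f : (forall j, (j < n)%nat -> 0 <= f j) -> 0 <= sumR n f.
Proof.
  intros H. rewrite <- (Rmult_0_r (INR n)), <- sumR_const. apply sumR_le; auto.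
Qed.

Lemma sumR_scal n c f : sumR n (fun j => c * f j) = c * sumR n f.
Proof. induction n; simpl; [lra|]. rewrite IHn. lra. Qed.

Lemma sumR_single_le n f j :
  (forall i, (i < n)%nat -> 0 <= f i) -> (j < n)%nat -> f j <= sumR n f.
Proof.
  induction n; simpl; intros H Hj; [lia|].
  assert (0 <= sumR n f) by (apply sumR_nonneg; intros; apply H; lia).
  destruct (Nat.eq_dec j n) as [->|Hne]; [lra|].
  assert (f j <= sumR n f) by (apply IHn; [intros; apply H; lia|lia]).
  assert (0 <= f n) by (apply H; lia). lra.
Qed.

Lemma Cnorm_sq z : Cnorm z ^ 2 = fst z ^ 2 + snd z ^ 2.
Proof. unfold Cnorm. rewrite pow2_sqrt; auto. nra. Qed.

Lemma Cnorm_nonneg z : 0 <= Cnorm z.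
Proof. apply sqrt_pos. Qed.

Lemma vsq_nonneg n v : 0 <= vsq n v.
Proof. apply sumR_nonneg. intros; nra. Qed.

Lemma vnorm_vsq n v : vnorm n v = sqrt (vsq n v).
Proof. unfold vnorm, vsq. f_equal. apply sumR_ext. intros; apply Cnorm_sq. Qed.

Lemma vnorm_nonneg n v : 0 <= vnorm n v.
Proof. apply sqrt_pos. Qed.

Lemma vnorm_sq n v : vnorm n v ^ 2 = vsq n v.
Proof. rewrite vnorm_vsq, pow2_sqrt; auto. apply vsq_nonneg. Qed.

Lemma vnorm_ext n u v : (forall j, (j < n)%nat -> u j = v j) -> vnorm n u = vnorm n v.
Proof. intros H. unfold vnorm. f_equal. apply sumR_ext. intros; rewrite H; auto. Qed.

(* Inductive step of Cauchy–Schwarz: [S^2 <= A B] and [p^2 <= a b] add up. *)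
Lemma cauchy_schwarz_step S A B p a b : 0 <= A -> 0 <= B -> 0 <= a -> 0 <= b ->
  S ^ 2 <= A * B -> p ^ 2 <= a * b -> (S + p) ^ 2 <= (A + a) * (B + b).
Proof.
  intros HA HB Ha Hb H1 H2.
  assert (HAb : 0 <= A * b) by (apply Rmult_le_pos; auto).
  assert (HaB : 0 <= a * B) by (apply Rmult_le_pos; auto).
  assert (Hprod : (S * p) ^ 2 <= ((A * b + a * B) / 2) ^ 2).
  { replace ((S * p) ^ 2) with (S ^ 2 * p ^ 2) by ring.
    apply Rle_trans with ((A * B) * (a * b)); [apply Rmult_le_compat; auto; nra|].
    pose proof (pow2_ge_0 (A * b - a * B)). nra. }
  assert (Hcross : S * p <= (A * b + a * B) / 2).
  { destruct (Rle_dec (S * p) 0); [lra|].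
    apply Rsqr_incr_0_var; unfold Rsqr; nra. }
  nra.
Qed.

Lemma ip_cauchy_schwarz n u v : ip n u v ^ 2 <= vsq n u * vsq n v.
Proof.
  unfold ip, vsq. induction n; simpl; [lra|].
  apply cauchy_schwarz_step; try (apply sumR_nonneg; intros; nra); try nra; auto.
  pose proof (pow2_ge_0 (fst (u n) * snd (v n) - snd (u n) * fst (v n))). nra.
Qed.

Lemma ip_le n u v : ip n u v <= vnorm n u * vnorm n v.
Proof.
  rewrite !vnorm_vsq, <- sqrt_mult by apply vsq_nonneg.
  destruct (Rle_dec (ip n u v) 0). { pose proof (sqrt_pos (vsq n u * vsq n v)). lra. }
  rewrite <- (sqrt_pow2 (ip n u v)) by lra. apply sqrt_le_1_alt. apply ip_cauchy_schwarz.
Qed.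

Lemma vsq_add n u v : vsq n (vadd u v) = vsq n u + 2 * ip n u v + vsq n v.
Proof.
  unfold vsq, ip, vadd, Cadd. induction n; simpl; [lra|]. simpl in IHn. rewrite IHn. ring.
Qed.

Lemma vnorm_add n u v : vnorm n (vadd u v) <= vnorm n u + vnorm n v.
Proof.
  pose proof (vnorm_nonneg n u). pose proof (vnorm_nonneg n v).
  pose proof (vnorm_nonneg n (vadd u v)).
  apply Rsqr_incr_0_var; auto; try lra. unfold Rsqr.
  pose proof (vnorm_sq n (vadd u v)) as Hs. pose proof (vnorm_sq n u). pose proof (vnorm_sq n v).
  rewrite vsq_add in Hs. pose proof (ip_le n u v). nra.
Qed.

Lemma vnorm_add3 n x y z : vnorm n (vadd (vadd x y) z) <= vnorm n x + vnorm n y + vnorm n z.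
Proof. eapply Rle_trans. apply vnorm_add. pose proof (vnorm_add n x y). lra. Qed.

Lemma vnorm_scale n r v : vnorm n (vscale r v) = Rabs r * vnorm n v.
Proof.
  rewrite !vnorm_vsq. rewrite <- (sqrt_pow2 (Rabs r)) by apply Rabs_pos.
  rewrite <- sqrt_mult; [|nra|apply vsq_nonneg]. f_equal.
  unfold vsq, vscale, Cscale. simpl. rewrite <- sumR_scal. apply sumR_ext. intros.
  assert (E : Rabs r * Rabs r = r * r) by (rewrite <- Rabs_mult; apply Rabs_pos_eq; nra). nra.
Qed.

Lemma vnorm_neg n x : vnorm n (vscale (-1) x) = vnorm n x.
Proof. rewrite vnorm_scale, Rabs_left by lra. ring. Qed.

Lemma vnorm_sub_sym n u v : vnorm n (vsub u v) = vnorm n (vsub v u).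
Proof. replace (vsub u v) with (vscale (-1) (vsub v u)) by vring. apply vnorm_neg. Qed.

Lemma vnorm_tri n u v w : vnorm n (vsub u w) <= vnorm n (vsub u v) + vnorm n (vsub v w).
Proof. replace (vsub u w) with (vadd (vsub u v) (vsub v w)) by vring. apply vnorm_add. Qed.

Lemma vnorm_zero n : vnorm n vzero = 0.
Proof.
  rewrite vnorm_vsq. unfold vsq. rewrite (sumR_ext n _ (fun _ => 0)).
  - rewrite sumR_const, Rmult_0_r. apply sqrt_0.
  - intros; unfold vzero, C0; simpl; ring.
Qed.

Lemma vsub_self u : vsub u u = vzero.
Proof. vring. Qed.

Lemma vsub_zero_r x : vsub x vzero = x.
Proof. apply functional_extensionality; intro j. unfold vsub, vzero, Csub, C0. destruct (x j); simpl; f_equal; ring. Qed.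

Lemma vnorm_sub_self n u : vnorm n (vsub u u) = 0.
Proof. rewrite vsub_self. apply vnorm_zero. Qed.

Lemma vnorm_rev_tri n u v : Rabs (vnorm n u - vnorm n v) <= vnorm n (vsub u v).
Proof.
  pose proof (vnorm_tri n u v vzero). pose proof (vnorm_tri n v u vzero).
  rewrite !vsub_zero_r in *. rewrite (vnorm_sub_sym n v u) in *. apply Rabs_le. lra.
Qed.

Lemma Cnorm_le_vnorm n v j : (j < n)%nat -> Cnorm (v j) <= vnorm n v.
Proof.
  intros Hj. unfold vnorm. rewrite <- (sqrt_pow2 (Cnorm (v j))) by apply Cnorm_nonneg.
  apply sqrt_le_1_alt. apply (sumR_single_le n (fun j => Cnorm (v j) ^ 2)); auto.
  intros; nra.
Qed.

Lemma fst_le_Cnorm z : Rabs (fst z) <= Cnorm z.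
Proof.
  unfold Cnorm. rewrite <- (sqrt_pow2 (Rabs _)) by apply Rabs_pos. apply sqrt_le_1_alt.
  rewrite pow2_abs. nra.
Qed.

Lemma snd_le_Cnorm z : Rabs (snd z) <= Cnorm z.
Proof.
  unfold Cnorm. rewrite <- (sqrt_pow2 (Rabs _)) by apply Rabs_pos. apply sqrt_le_1_alt.
  rewrite pow2_abs. nra.
Qed.

Lemma Cnorm_le_comps z : Cnorm z <= Rabs (fst z) + Rabs (snd z).
Proof.
  pose proof (Rabs_pos (fst z)). pose proof (Rabs_pos (snd z)).
  unfold Cnorm. rewrite <- (sqrt_pow2 (Rabs (fst z) + Rabs (snd z))) by lra.
  apply sqrt_le_1_alt. rewrite <- (pow2_abs (fst z)), <- (pow2_abs (snd z)). nra.
Qed.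

Lemma Cnorm_rev z w : Rabs (Cnorm z - Cnorm w) <= Cnorm (Csub z w).
Proof.
  assert (E : forall x, vnorm 1 (fun _ => x) = Cnorm x).
  { intros x. unfold vnorm. simpl sumR. rewrite Rplus_0_l. apply sqrt_pow2, Cnorm_nonneg. }
  pose proof (vnorm_rev_tri 1 (fun _ => z) (fun _ => w)) as H.
  unfold vsub in H. rewrite !E in H. exact H.
Qed.

Lemma vnorm_le_sum n v : vnorm n v <= sumR n (fun j => Cnorm (v j)).
Proof.
  unfold vnorm. induction n; cbn [sumR]; [rewrite sqrt_0; lra|].
  set (A := sumR n (fun j => Cnorm (v j) ^ 2)) in *.
  assert (HA : 0 <= A) by (apply sumR_nonneg; intros; nra).
  pose proof (Cnorm_nonneg (v n)). pose proof (sqrt_pos A). pose proof (sqrt_sqrt A HA).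
  apply Rle_trans with (sqrt A + Cnorm (v n)); [|lra].
  rewrite <- (sqrt_pow2 (sqrt A + Cnorm (v n))) by lra. apply sqrt_le_1_alt. nra.
Qed.

Lemma vnorm_le_comp n v c : (forall j, (j < n)%nat -> Cnorm (v j) <= c) -> vnorm n v <= INR n * c.
Proof.
  intros H. eapply Rle_trans. apply vnorm_le_sum. rewrite <- sumR_const. apply sumR_le. auto.
Qed.

Lemma vnorm_le_coords n v c :
  (forall j, (j < n)%nat -> Rabs (fst (v j)) <= c /\ Rabs (snd (v j)) <= c) ->
  vnorm n v <= 2 * INR n * c.
Proof.
  intros H. replace (2 * INR n * c) with (INR n * (2 * c)) by ring. apply vnorm_le_comp.
  intros j Hj. destruct (H j Hj). eapply Rle_trans. apply Cnorm_le_comps. lra.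
Qed.

Lemma vnorm_pointwise n u v c : 0 <= c ->
  (forall j, (j < n)%nat -> Cnorm (u j) <= c * Cnorm (v j)) -> vnorm n u <= c * vnorm n v.
Proof.
  intros Hc H. unfold vnorm. rewrite <- (sqrt_pow2 c) at 1 by auto.
  rewrite <- sqrt_mult; [apply sqrt_le_1_alt|nra|apply sumR_nonneg; intros; nra]. rewrite <- sumR_scal. apply sumR_le. intros j Hj.
  pose proof (H j Hj). pose proof (Cnorm_nonneg (u j)). pose proof (Cnorm_nonneg (v j)).
  replace (c ^ 2 * Cnorm (v j) ^ 2) with ((c * Cnorm (v j)) ^ 2) by ring.
  apply pow_incr; auto.
Qed.

Definition rcont (f : R -> R) (a b : R) : Prop :=
  forall t, a <= t <= b -> forall e, 0 < e -> exists d, 0 < d /\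
    forall s, a <= s <= b -> Rabs (s - t) < d -> Rabs (f s - f t) < e.

Lemma rcont_of_cont f a b : (forall t, continuity_pt f t) -> rcont f a b.
Proof.
  intros H t Ht e He. destruct (H t e He) as [d [Hd Hd']]. exists d. split; auto.
  intros s Hs Hst. destruct (Req_dec s t) as [->|Hne]; [rewrite Rminus_diag, Rabs_R0; lra|].
  apply (Hd' s). repeat split; auto.
Qed.

Lemma deriv_loc (f g : R -> R) x l r : 0 < r -> (forall y, Rabs (y - x) < r -> f y = g y) ->
  derivable_pt_lim f x l -> derivable_pt_lim g x l.
Proof.
  intros Hr Heq H e He. destruct (H e He) as [d Hd].
  assert (Hm : 0 < Rmin d r) by (apply Rmin_pos; [apply cond_pos|auto]).
  exists (mkposreal _ Hm). intros h Hh Hhd. simpl in Hhd.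
  rewrite <- !Heq.
  - apply Hd; auto. eapply Rlt_le_trans; [apply Hhd|apply Rmin_l].
  - rewrite Rminus_diag, Rabs_R0; auto.
  - replace (x + h - x) with h by ring. eapply Rlt_le_trans; [apply Hhd|apply Rmin_r].
Qed.

(* Clamping into [[a, b]] turns relative continuity into continuity. *)
Definition clamp a b t := Rmax a (Rmin b t).

Lemma clamp_in a b t : a <= b -> a <= clamp a b t <= b.
Proof. intros. unfold clamp. split; [apply Rmax_l|]. apply Rmax_lub; auto. apply Rmin_l. Qed.

Lemma clamp_id a b t : a <= t <= b -> clamp a b t = t.
Proof. intros. unfold clamp. rewrite Rmin_right by lra. rewrite Rmax_right; lra. Qed.

Lemma clamp_lip a b s t : a <= b -> Rabs (clamp a b s - clamp a b t) <= Rabs (s - t).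
Proof.
  intros H. pose proof (Rle_abs (s - t)). pose proof (Rle_abs (-(s - t))). rewrite Rabs_Ropp in *.
  unfold clamp, Rmax, Rmin. repeat destruct Rle_dec; apply Rabs_le; lra.
Qed.

Lemma nonincreasing_of_deriv f df a b : a < b -> rcont f a b ->
  (forall t, a < t < b -> derivable_pt_lim f t (df t)) ->
  (forall t, a < t < b -> df t <= 0) -> f b <= f a.
Proof.
  intros Hab Hc Hd Hneg.
  set (g := fun t => f (clamp a b t)).
  assert (Hg : forall t, a < t < b -> derivable_pt_lim g t (df t)).
  { intros t Ht. apply (deriv_loc f g t (df t) (Rmin (t - a) (b - t))); [apply Rmin_pos; lra| |auto].
    intros y Hy. unfold g. rewrite clamp_id; auto.
    pose proof (Rmin_l (t - a) (b - t)). pose proof (Rmin_r (t - a) (b - t)).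
    apply Rabs_def2 in Hy. lra. }
  assert (Hgc : forall c, a <= c <= b -> continuity_pt g c).
  { intros c Hcab e He. destruct (Hc c Hcab e He) as [d [Hd0 Hd1]]. exists d. split; auto.
    intros x [_ Hx]. simpl in *. unfold R_dist, g in *. rewrite (clamp_id a b c) by auto.
    pose proof (clamp_lip a b x c ltac:(lra)) as Hcl. rewrite (clamp_id a b c) in Hcl by auto.
    apply Hd1; [apply clamp_in; lra|lra]. }
  assert (pr1 : forall c, a < c < b -> derivable_pt g c) by (intros c Hcc; exists (df c); exact (Hg c Hcc)).
  assert (pr2 : forall c, a < c < b -> derivable_pt id c) by (intros; apply derivable_pt_id).
  destruct (MVT g id a b pr1 pr2 Hab Hgc
              (fun c _ => derivable_continuous_pt _ _ (derivable_pt_id c))) as [c [Pc Heq]].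
  rewrite (derive_pt_eq_0 g c (df c) (pr1 c Pc) (Hg c Pc)) in Heq.
  rewrite (derive_pt_eq_0 id c 1 (pr2 c Pc) (derivable_pt_lim_id c)) in Heq.
  unfold id, g in Heq. rewrite !clamp_id in Heq by lra.
  pose proof (Hneg c Pc). nra.
Qed.

Lemma deriv_sumR n (F : R -> nat -> R) (dF : nat -> R) x :
  (forall j, (j < n)%nat -> derivable_pt_lim (fun t => F t j) x (dF j)) ->
  derivable_pt_lim (fun t => sumR n (F t)) x (sumR n dF).
Proof.
  induction n; intros H; simpl.
  - apply (derivable_pt_lim_const 0).
  - apply (derivable_pt_lim_plus (fun t => sumR n (F t)) (fun t => F t n)); [|apply H; lia].
    apply IHn; intros; apply H; lia.
Qed.

Lemma deriv_vsq n (u : R -> nat -> Cx) (d : nat -> Cx) c x : deriv_at n u x d ->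
  derivable_pt_lim (fun t => vsq n (vsub (u t) c)) x (2 * ip n (vsub (u x) c) d).
Proof.
  intros H. unfold vsq, ip. rewrite <- sumR_scal.
  apply (deriv_sumR n (fun t j => fst (vsub (u t) c j) ^ 2 + snd (vsub (u t) c j) ^ 2)).
  intros j Hj. destruct (H j Hj) as [H1 H2]. unfold Cre, Cim, vsub, Csub in *; cbn [fst snd].
  assert (Hsq : forall f df, derivable_pt_lim f x df -> forall c0,
            derivable_pt_lim (fun t => (f t - c0) ^ 2) x (2 * (f x - c0) * df)).
  { intros f df Hf c0. apply is_derive_Reals. apply is_derive_Reals in Hf.
    replace (2 * (f x - c0) * df) with (df * (2 * (f x - c0))) by ring.
    apply (is_derive_comp (fun y => (y - c0) ^ 2) f); auto. auto_derive; auto. ring. }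
  replace (2 * _) with (2 * (fst (u x j) - fst (c j)) * fst (d j) +
                        2 * (snd (u x j) - snd (c j)) * snd (d j)) by ring.
  apply (derivable_pt_lim_plus (fun t => (fst (u t j) - fst (c j)) ^ 2)
           (fun t => (snd (u t j) - snd (c j)) ^ 2)); apply Hsq; auto.
Qed.

Lemma sqrt_sq_eta_lip x y eta : 0 <= x -> 0 <= y -> 0 < eta ->
  Rabs (sqrt (x ^ 2 + eta) - sqrt (y ^ 2 + eta)) <= Rabs (x - y).
Proof.
  intros Hx Hy He.
  assert (G : forall x y, 0 <= x -> 0 <= y -> sqrt (x ^ 2 + eta) <= sqrt (y ^ 2 + eta) + Rabs (x - y)).
  { clear x y Hx Hy. intros x y Hx Hy.
    pose proof (sqrt_pos (y ^ 2 + eta)). pose proof (sqrt_sqrt (y ^ 2 + eta) ltac:(nra)).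
    pose proof (Rabs_pos (x - y)). pose proof (Rle_abs (x - y)).
    assert (y <= sqrt (y ^ 2 + eta)).
    { rewrite <- (sqrt_pow2 y) at 1 by auto. apply sqrt_le_1_alt. lra. }
    assert ((x - y) ^ 2 = Rabs (x - y) ^ 2) by (rewrite pow2_abs; auto).
    rewrite <- (sqrt_pow2 (sqrt (y ^ 2 + eta) + Rabs (x - y))) by lra.
    apply sqrt_le_1_alt. nra. }
  pose proof (G x y Hx Hy). pose proof (G y x Hy Hx) as Hyx. rewrite Rabs_minus_sym in Hyx.
  apply Rabs_le. lra.
Qed.

(** The norm is not differentiable at [0], so we differentiate the regularized
    distance [sqrt (|u t - u a|^2 + eta)] and let [eta] go to [0]. *)

Section MeanValueInequality.
Variables (n : nat) (u d : R -> nat -> Cx) (c : nat -> Cx) (eta : R).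
Hypothesis Heta : 0 < eta.

Let rdist t := sqrt (vsq n (vsub (u t) c) + eta).

Lemma rdist_pos t : 0 < rdist t.
Proof. apply sqrt_lt_R0. pose proof (vsq_nonneg n (vsub (u t) c)). lra. Qed.

Lemma rdist_ge t : vnorm n (vsub (u t) c) <= rdist t.
Proof. rewrite vnorm_vsq. apply sqrt_le_1_alt. lra. Qed.

Lemma rdist_rcont a b : cont_on n u a b -> rcont rdist a b.
Proof.
  intros Hu t Ht e He. destruct (Hu t Ht e He) as [dl [Hdl Hdl']].
  exists dl. split; auto. intros s Hs Hst. specialize (Hdl' s Hs Hst).
  unfold rdist. rewrite <- !vnorm_sq.
  eapply Rle_lt_trans; [apply sqrt_sq_eta_lip; auto; apply vnorm_nonneg|].
  eapply Rle_lt_trans; [apply vnorm_rev_tri|].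
  replace (vsub (vsub (u s) c) (vsub (u t) c)) with (vsub (u s) (u t)) by vring. auto.
Qed.

Lemma rdist_deriv t : deriv_at n u t (d t) ->
  derivable_pt_lim rdist t (ip n (vsub (u t) c) (d t) / rdist t).
Proof.
  intros Hd. pose proof (rdist_pos t) as Hp. unfold rdist in *.
  replace (ip n (vsub (u t) c) (d t) / sqrt (vsq n (vsub (u t) c) + eta)) with
    (/ (2 * sqrt (vsq n (vsub (u t) c) + eta)) * (2 * ip n (vsub (u t) c) (d t) + 0))
    by (field; lra).
  apply (derivable_pt_lim_comp (fun t => vsq n (vsub (u t) c) + eta) sqrt).
  - apply (derivable_pt_lim_plus (fun t => vsq n (vsub (u t) c)) (fct_cte eta)).
    + apply deriv_vsq; auto.
    + apply derivable_pt_lim_const.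
  - apply derivable_pt_lim_sqrt. pose proof (vsq_nonneg n (vsub (u t) c)). lra.
Qed.

Lemma rdist_deriv_le t : ip n (vsub (u t) c) (d t) / rdist t <= vnorm n (d t).
Proof.
  pose proof (rdist_pos t). pose proof (rdist_ge t).
  pose proof (ip_le n (vsub (u t) c) (d t)).
  pose proof (vnorm_nonneg n (d t)). pose proof (vnorm_nonneg n (vsub (u t) c)).
  apply Rmult_le_reg_r with (rdist t); auto. unfold Rdiv.
  rewrite Rmult_assoc, Rinv_l by lra. nra.
Qed.

End MeanValueInequality.

Lemma mvi_gen n (u d : R -> nat -> Cx) (M dM : R -> R) a b :
  a <= b -> cont_on n u a b -> rcont M a b ->
  (forall t, a < t < b -> deriv_at n u t (d t)) ->
  (forall t, a < t < b -> derivable_pt_lim M t (dM t)) ->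
  (forall t, a < t < b -> vnorm n (d t) <= dM t) ->
  vnorm n (vsub (u b) (u a)) <= M b - M a.
Proof.
  intros Hab Hu HM Hd HdM Hle.
  destruct (Req_dec a b) as [<-|Hab']; [rewrite vnorm_sub_self; lra|].
  assert (Hreg : forall eta, 0 < eta -> vnorm n (vsub (u b) (u a)) <= sqrt eta + M b - M a).
  { intros eta Heta.
    pose (rd := fun t => sqrt (vsq n (vsub (u t) (u a)) + eta)).
    assert (Hdec : rd b - M b <= rd a - M a).
    { apply (nonincreasing_of_deriv (fun t => rd t - M t)
               (fun t => ip n (vsub (u t) (u a)) (d t) / rd t - dM t) a b); [lra| | |].
      - intros t Ht e He.
        destruct (rdist_rcont n u (u a) eta Heta a b Hu t Ht (e / 2)) as [d1 [Hd1 H1]]; [lra|].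
        destruct (HM t Ht (e / 2)) as [d2 [Hd2 H2]]; [lra|].
        exists (Rmin d1 d2). split; [apply Rmin_pos; auto|]. intros s Hs Hst.
        specialize (H1 s Hs ltac:(eapply Rlt_le_trans; [apply Hst|apply Rmin_l])).
        specialize (H2 s Hs ltac:(eapply Rlt_le_trans; [apply Hst|apply Rmin_r])).
        apply Rabs_lt_between' in H1, H2. apply Rabs_lt_between'. unfold rd. lra.
      - intros t Ht. apply derivable_pt_lim_minus; [apply rdist_deriv; auto|apply HdM; auto].
      - intros t Ht. pose proof (rdist_deriv_le n u d (u a) eta Heta t). pose proof (Hle t Ht).
        unfold rd. lra. }
    pose proof (rdist_ge n u (u a) eta Heta b). unfold rd in Hdec.
    rewrite vsub_self in Hdec.
    replace (vsq n vzero) with 0 in Hdec by (rewrite <- vnorm_sq, vnorm_zero; ring).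
    rewrite Rplus_0_l in Hdec. lra. }
  apply Rnot_lt_le. intros Hc.
  set (g := vnorm n (vsub (u b) (u a)) - (M b - M a)).
  specialize (Hreg ((g / 2) ^ 2) ltac:(unfold g; nra)).
  rewrite sqrt_pow2 in Hreg by (unfold g; lra). unfold g in *. lra.
Qed.

Lemma rcont_lin c a b : rcont (fun t => c * t) a b.
Proof.
  apply rcont_of_cont. intros t. apply continuity_pt_scal, derivable_continuous_pt, derivable_pt_id.
Qed.

Lemma mvi n (u d : R -> nat -> Cx) c a b :
  a <= b -> cont_on n u a b ->
  (forall t, a < t < b -> deriv_at n u t (d t)) ->
  (forall t, a < t < b -> vnorm n (d t) <= c) ->
  vnorm n (vsub (u b) (u a)) <= c * (b - a).
Proof.
  intros. replace (c * (b - a)) with (c * b - c * a) by ring.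
  apply (mvi_gen n u d (fun t => c * t) (fun _ => c)); auto using rcont_lin.
  intros t Ht. apply is_derive_Reals. auto_derive; auto. ring.
Qed.

Lemma mvi_sym n (u d : R -> nat -> Cx) c t :
  (forall a b, cont_on n u a b) -> (forall s, deriv_at n u s (d s)) ->
  (forall s, Rabs s <= Rabs t -> vnorm n (d s) <= c) ->
  vnorm n (vsub (u t) (u 0)) <= c * Rabs t.
Proof.
  intros Hc Hd Hb. destruct (Rle_dec 0 t).
  - rewrite Rabs_pos_eq by auto. replace t with (t - 0) at 2 by ring.
    apply (mvi n u d); auto. intros s Hs. apply Hb. rewrite !Rabs_pos_eq; lra.
  - rewrite Rabs_left, vnorm_sub_sym by lra. replace (- t) with (0 - t) by ring.
    apply (mvi n u d); auto; try lra. intros s Hs. apply Hb. rewrite !Rabs_left; lra.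
Qed.

Lemma cont_on_sub n u a b a' b' : a <= a' -> b' <= b -> cont_on n u a b -> cont_on n u a' b'.
Proof.
  intros H1 H2 H t Ht e He. destruct (H t ltac:(lra) e He) as [d [Hd Hd']].
  exists d; split; auto. intros s Hs Hst. apply Hd'; auto. lra.
Qed.

Lemma finite_min (Q : nat -> R -> Prop) N :
  (forall j d d', 0 < d' -> d' <= d -> Q j d -> Q j d') ->
  (forall j, (j < N)%nat -> exists d, 0 < d /\ Q j d) ->
  exists d, 0 < d /\ forall j, (j < N)%nat -> Q j d.
Proof.
  intros Hm. induction N; intros H.
  - exists 1. split; [lra|]. intros; lia.
  - destruct IHN as [d1 [Hd1 H1]]; [intros; apply H; lia|].
    destruct (H N ltac:(lia)) as [d2 [Hd2 H2]].
    exists (Rmin d1 d2). split; [apply Rmin_pos; auto|]. intros j Hj.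
    destruct (Nat.eq_dec j N) as [->|Hne].
    + eapply Hm; [apply Rmin_pos; auto|apply Rmin_r|auto].
    + eapply Hm; [apply Rmin_pos; auto|apply Rmin_l|apply H1; lia].
Qed.

Lemma finite_max (Q : nat -> R -> Prop) N :
  (forall j d d', d <= d' -> Q j d -> Q j d') ->
  (forall j, (j < N)%nat -> exists d, Q j d) ->
  exists d, 0 <= d /\ forall j, (j < N)%nat -> Q j d.
Proof.
  intros Hm. induction N; intros H.
  - exists 0. split; [lra|]. intros; lia.
  - destruct IHN as [d1 [Hd1 H1]]; [intros; apply H; lia|].
    destruct (H N ltac:(lia)) as [d2 H2].
    exists (Rmax d1 d2). split; [eapply Rle_trans; [apply Hd1|apply Rmax_l]|]. intros j Hj.
    destruct (Nat.eq_dec j N) as [->|Hne].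
    + eapply Hm; [apply Rmax_r|auto].
    + eapply Hm; [apply Rmax_l|apply H1; lia].
Qed.

Lemma cont_on_of_coords n u a b :
  (forall t, a <= t <= b -> forall j, (j < n)%nat -> forall e, 0 < e -> exists d, 0 < d /\
     forall s, a <= s <= b -> Rabs (s - t) < d ->
       Rabs (fst (u s j) - fst (u t j)) < e /\ Rabs (snd (u s j) - snd (u t j)) < e) ->
  cont_on n u a b.
Proof.
  intros H t Ht e He.
  set (e' := e / (2 * INR n + 1)). pose proof (pos_INR n).
  assert (He' : 0 < e') by (unfold e'; apply Rdiv_lt_0_compat; lra).
  destruct (finite_min (fun j d => forall s, a <= s <= b -> Rabs (s - t) < d ->
       Rabs (fst (u s j) - fst (u t j)) < e' /\ Rabs (snd (u s j) - snd (u t j)) < e') n)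
    as [d [Hd Hd']].
  { intros j d d' Hd' Hle HP s Hs Hst. apply HP; auto. lra. }
  { intros j Hj. apply H; auto. }
  exists d. split; auto. intros s Hs Hst.
  eapply Rle_lt_trans.
  - apply (vnorm_le_coords n _ e'). intros j Hj. destruct (Hd' j Hj s Hs Hst).
    unfold vsub, Csub; simpl. lra.
  - unfold e'. apply Rmult_lt_reg_r with (2 * INR n + 1); [lra|].
    replace (2 * INR n * (e / (2 * INR n + 1)) * (2 * INR n + 1)) with (2 * INR n * e)
      by (field; lra). nra.
Qed.

Lemma deriv_cont n u d a b : (forall t, a <= t <= b -> deriv_at n u t (d t)) -> cont_on n u a b.
Proof.
  intros H. apply cont_on_of_coords. intros t Ht j Hj e He.
  destruct (H t Ht j Hj) as [H1 H2].
  destruct (derivable_continuous_pt _ _ (exist _ _ H1) e He) as [d1 [Hd1 Hd1']].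
  destruct (derivable_continuous_pt _ _ (exist _ _ H2) e He) as [d2 [Hd2 Hd2']].
  exists (Rmin d1 d2). split; [apply Rmin_pos; auto|]. intros s Hs Hst.
  destruct (Req_dec s t) as [->|Hne]; [rewrite !Rminus_diag, Rabs_R0; lra|].
  pose proof (Rmin_l d1 d2). pose proof (Rmin_r d1 d2).
  split; [apply (Hd1' s)|apply (Hd2' s)]; repeat split; auto; simpl; unfold R_dist; lra.
Qed.

Lemma cont_on_vsub n u v a b :
  cont_on n u a b -> cont_on n v a b -> cont_on n (fun t => vsub (u t) (v t)) a b.
Proof.
  intros Hu Hv t Ht e He. destruct (Hu t Ht (e/2)) as [d1 [Hd1 H1]]; [lra|].
  destruct (Hv t Ht (e/2)) as [d2 [Hd2 H2]]; [lra|].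
  exists (Rmin d1 d2). split; [apply Rmin_pos; auto|]. intros s Hs Hst.
  replace (vsub (vsub (u s) (v s)) (vsub (u t) (v t)))
    with (vadd (vsub (u s) (u t)) (vscale (-1) (vsub (v s) (v t)))) by vring.
  eapply Rle_lt_trans; [apply vnorm_add|]. rewrite vnorm_neg.
  pose proof (H1 s Hs ltac:(eapply Rlt_le_trans; [apply Hst|apply Rmin_l])).
  pose proof (H2 s Hs ltac:(eapply Rlt_le_trans; [apply Hst|apply Rmin_r])). lra.
Qed.

Lemma cont_on_vscale n c u a b : cont_on n u a b -> cont_on n (fun t => vscale c (u t)) a b.
Proof.
  intros Hu t Ht e He. pose proof (Rabs_pos c) as Hc.
  destruct (Hu t Ht (e / (Rabs c + 1))) as [d [Hd H]]; [apply Rdiv_lt_0_compat; lra|].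
  exists d. split; auto. intros s Hs Hst.
  replace (vsub (vscale c (u s)) (vscale c (u t))) with (vscale c (vsub (u s) (u t))) by vring.
  rewrite vnorm_scale. specialize (H s Hs Hst).
  pose proof (vnorm_nonneg n (vsub (u s) (u t))).
  apply Rle_lt_trans with ((Rabs c + 1) * vnorm n (vsub (u s) (u t))); [nra|].
  apply Rmult_lt_reg_l with (/ (Rabs c + 1)); [apply Rinv_0_lt_compat; lra|].
  rewrite <- Rmult_assoc, Rinv_l by lra. lra.
Qed.

Lemma cont_on_lin n w a b : cont_on n (fun t => vscale t w) a b.
Proof.
  intros t Ht e He. pose proof (vnorm_nonneg n w).
  exists (e / (vnorm n w + 1)). split; [apply Rdiv_lt_0_compat; lra|].
  intros s Hs Hst. replace (vsub (vscale s w) (vscale t w)) with (vscale (s - t) w) by vring.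
  rewrite vnorm_scale. pose proof (Rabs_pos (s - t)).
  apply Rle_lt_trans with (Rabs (s - t) * (vnorm n w + 1)); [nra|].
  apply Rmult_lt_reg_r with (/ (vnorm n w + 1)); [apply Rinv_0_lt_compat; lra|].
  rewrite Rmult_assoc, Rinv_r by lra. lra.
Qed.

Lemma cont_on_refl n u a b : cont_on n u a b -> cont_on n (fun s => u (- s)) (- b) (- a).
Proof.
  intros H t Ht e He. destruct (H (- t) ltac:(lra) e He) as [d [Hd H']].
  exists d. split; auto. intros s Hs Hst. apply H'; [lra|].
  replace (- s - - t) with (- (s - t)) by ring. rewrite Rabs_Ropp. auto.
Qed.

Lemma cont_on_refl_sym n u T : 0 <= T -> cont_on n u (- T) T -> cont_on n (fun s => u (- s)) 0 T.
Proof.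
  intros HT H. pose proof (cont_on_refl n u (- T) 0 ltac:(apply (cont_on_sub n u (- T) T); auto; lra))
    as Hc. rewrite Ropp_0, Ropp_involutive in Hc. auto.
Qed.

Lemma deriv_vsub n u v du dv t : deriv_at n u t du -> deriv_at n v t dv ->
  deriv_at n (fun s => vsub (u s) (v s)) t (vsub du dv).
Proof.
  intros Hu Hv j Hj. destruct (Hu j Hj), (Hv j Hj). unfold vsub, Csub, Cre, Cim in *; simpl.
  split; apply (derivable_pt_lim_minus (fun s => fst (u s j)) (fun s => fst (v s j))) ||
              apply (derivable_pt_lim_minus (fun s => snd (u s j)) (fun s => snd (v s j))); auto.
Qed.

Lemma deriv_vscale n c u du t :
  deriv_at n u t du -> deriv_at n (fun s => vscale c (u s)) t (vscale c du).
Proof.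
  intros Hu j Hj. destruct (Hu j Hj). unfold vscale, Cscale, Cre, Cim in *; simpl.
  split; [apply (derivable_pt_lim_scal (fun s => fst (u s j)))
         |apply (derivable_pt_lim_scal (fun s => snd (u s j)))]; auto.
Qed.

Lemma deriv_lin n w t : deriv_at n (fun s => vscale s w) t w.
Proof.
  intros j Hj. unfold vscale, Cscale, Cre, Cim; simpl.
  split; apply is_derive_Reals; auto_derive; auto; ring.
Qed.

Lemma deriv_refl n u d t :
  deriv_at n u (- t) d -> deriv_at n (fun s => u (- s)) t (vscale (-1) d).
Proof.
  intros H j Hj. destruct (H j Hj) as [H1 H2]. unfold vscale, Cscale, Cre, Cim in *; simpl.
  apply is_derive_Reals in H1, H2.
  split; apply is_derive_Reals;
  [apply (is_derive_comp (fun s => fst (u s j)) Ropp)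
  |apply (is_derive_comp (fun s => snd (u s j)) Ropp)]; auto; auto_derive; auto; ring.
Qed.

Lemma deriv_shift n (G : R -> nat -> Cx) t tau d :
  deriv_at n G (t + tau) d -> deriv_at n (fun s => G (s + tau)) t d.
Proof.
  intros H j Hj. destruct (H j Hj) as [H1 H2]. apply is_derive_Reals in H1, H2.
  split; apply is_derive_Reals;
  [rewrite <- (Rmult_1_l (Cre (d j))); apply (is_derive_comp (fun s => Cre (G s j)) (fun s => s + tau))
  |rewrite <- (Rmult_1_l (Cim (d j))); apply (is_derive_comp (fun s => Cim (G s j)) (fun s => s + tau))];
  auto; auto_derive; auto; ring.
Qed.

Lemma deriv_at_ext n (u u' : R -> nat -> Cx) t d :
  (forall s j, (j < n)%nat -> u s j = u' s j) -> deriv_at n u' t d -> deriv_at n u t d.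
Proof.
  intros He H j Hj. destruct (H j Hj).
  split; eapply derivable_pt_lim_ext; eauto; intros; simpl; rewrite He; auto.
Qed.

Lemma deriv_at_ext_d n (u : R -> nat -> Cx) t d d' :
  (forall j, (j < n)%nat -> d j = d' j) -> deriv_at n u t d -> deriv_at n u t d'.
Proof. intros He H j Hj. rewrite <- He by auto. apply H; auto. Qed.

Definition gcont (n : nat) (u : R -> nat -> Cx) : Prop :=
  forall t e, 0 < e -> exists d, 0 < d /\
    forall s, Rabs (s - t) < d -> vnorm n (vsub (u s) (u t)) < e.

Lemma gcont_cont_on n u a b : gcont n u -> cont_on n u a b.
Proof. intros H t _ e He. destruct (H t e He) as [d [Hd H']]. exists d. split; auto. Qed.

Lemma deriv_gcont n u d : (forall t, deriv_at n u t (d t)) -> gcont n u.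
Proof.
  intros H t e He.
  destruct (deriv_cont n u d (t - 1) (t + 1) (fun s _ => H s) t ltac:(lra) e He) as [d0 [Hd0 H0]].
  exists (Rmin d0 1). split; [apply Rmin_pos; lra|]. intros s Hs.
  pose proof (Rmin_r d0 1). pose proof (Rmin_l d0 1). pose proof Hs as Hs'.
  apply Rabs_def2 in Hs'. apply H0; lra.
Qed.

Lemma coords_cont n (u : R -> nat -> Cx) t j : (j < n)%nat ->
  (forall e, 0 < e -> exists d, 0 < d /\
     forall s, Rabs (s - t) < d -> vnorm n (vsub (u s) (u t)) < e) ->
  continuity_pt (fun s => fst (u s j)) t /\ continuity_pt (fun s => snd (u s j)) t.
Proof.
  intros Hj H. split; intros e He; destruct (H e He) as [d [Hd H']]; exists d; (split; [auto|]);
  intros s [_ Hs]; simpl in *; unfold R_dist in *; specialize (H' s Hs);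
  (eapply Rle_lt_trans; [|apply H']);
  (eapply Rle_trans; [|apply (Cnorm_le_vnorm n _ j Hj)]).
  - pose proof (fst_le_Cnorm (vsub (u s) (u t) j)). unfold vsub, Csub in *; simpl in *; lra.
  - pose proof (snd_le_Cnorm (vsub (u s) (u t) j)). unfold vsub, Csub in *; simpl in *; lra.
Qed.

Lemma ftc (f : R -> R) : (forall t, continuity_pt f t) ->
  forall t, derivable_pt_lim (fun x => RInt f 0 x) t (f t).
Proof.
  intros Hf t. apply is_derive_Reals. apply (is_derive_RInt f (fun x => RInt f 0 x) 0 t).
  - exists (mkposreal 1 Rlt_0_1). intros b0 _.
    refine (@RInt_correct R_CompleteNormedModule f 0 b0
              (@ex_RInt_continuous R_CompleteNormedModule f 0 b0 _)).
    intros z _. apply continuity_pt_filterlim. apply Hf.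
  - apply continuity_pt_filterlim. apply Hf.
Qed.

Lemma sin_bounds x : 0 <= x -> - x <= sin x <= x.
Proof.
  intros Hx. destruct (Req_dec x 0) as [->|Hne]; [rewrite sin_0; lra|].
  assert (Hc : forall t, continuity_pt id t) by (intros; apply derivable_continuous_pt, derivable_pt_id).
  split.
  - assert (- sin x - x <= - sin 0 - 0); [|rewrite sin_0 in *; lra].
    apply (nonincreasing_of_deriv (fun t => - sin t - t) (fun t => - cos t - 1) 0 x); [lra| | |].
    + apply rcont_of_cont. intros. apply continuity_pt_minus; auto.
      apply continuity_pt_opp, continuity_sin.
    + intros. apply derivable_pt_lim_minus; [apply derivable_pt_lim_opp, derivable_pt_lim_sin
                                          |apply derivable_pt_lim_id].
    + intros. pose proof (COS_bound t). lra.
  - assert (sin x - x <= sin 0 - 0); [|rewrite sin_0 in *; lra].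
    apply (nonincreasing_of_deriv (fun t => sin t - t) (fun t => cos t - 1) 0 x); [lra| | |].
    + apply rcont_of_cont. intros. apply continuity_pt_minus; auto. apply continuity_sin.
    + intros. apply derivable_pt_lim_minus; [apply derivable_pt_lim_sin|apply derivable_pt_lim_id].
    + intros. pose proof (COS_bound t). lra.
Qed.

Lemma Rabs_sin_le x : Rabs (sin x) <= Rabs x.
Proof.
  destruct (Rle_dec 0 x).
  - rewrite (Rabs_pos_eq x) by auto. apply Rabs_le. apply sin_bounds; auto.
  - rewrite (Rabs_left x), <- Rabs_Ropp, <- sin_neg by lra. apply Rabs_le. apply sin_bounds; lra.
Qed.

Lemma Cexpi_sub_le a b : Cnorm (Csub (Cexpi a) (Cexpi b)) <= Rabs (a - b).
Proof.
  unfold Cnorm, Csub, Cexpi; cbn [fst snd].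
  rewrite <- (sqrt_pow2 (Rabs (a - b))) by apply Rabs_pos. apply sqrt_le_1_alt.
  assert (E : (cos a - cos b) ^ 2 + (sin a - sin b) ^ 2 = 2 - 2 * cos (a - b)).
  { rewrite cos_minus. pose proof (sin2_cos2 a). pose proof (sin2_cos2 b). unfold Rsqr in *. nra. }
  rewrite E. replace (a - b) with (2 * ((a - b) / 2)) at 1 by field. rewrite cos_2a_sin.
  pose proof (Rabs_sin_le ((a - b) / 2)) as Hs.
  assert (Rabs (sin ((a - b) / 2)) ^ 2 <= Rabs ((a - b) / 2) ^ 2)
    by (apply pow_incr; split; auto; apply Rabs_pos).
  rewrite !pow2_abs in *. nra.
Qed.

Lemma Cexpi_neg_sub1 a : Cnorm (Csub (Cexpi (- a)) (1, 0)) = Cnorm (Csub (Cexpi a) (1, 0)).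
Proof. unfold Cnorm, Csub, Cexpi; simpl. rewrite cos_neg, sin_neg. f_equal; ring. Qed.

Lemma Cexpi_period (m : Z) b : Cexpi (2 * PI * IZR m + b) = Cexpi b.
Proof.
  unfold Cexpi. destruct (Z_le_gt_dec 0 m).
  - rewrite <- (Z2Nat.id m), <- INR_IZR_INZ by auto.
    replace (2 * PI * INR (Z.to_nat m) + b) with (b + 2 * INR (Z.to_nat m) * PI) by ring.
    rewrite cos_period, sin_period. auto.
  - replace m with (- Z.of_nat (Z.to_nat (- m)))%Z by lia. rewrite opp_IZR, <- INR_IZR_INZ.
    set (k := Z.to_nat (- m)).
    replace b with ((2 * PI * - INR k + b) + 2 * INR k * PI) at 3 4 by ring.
    rewrite cos_period, sin_period. auto.
Qed.

Lemma Cnorm_mul z w : Cnorm (Cmul z w) = Cnorm z * Cnorm w.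
Proof. unfold Cnorm, Cmul; simpl. rewrite <- sqrt_mult by nra. f_equal. ring. Qed.

Lemma Cnorm_expi_mul a z : Cnorm (Cmul (Cexpi a) z) = Cnorm z.
Proof.
  rewrite Cnorm_mul. unfold Cnorm at 1, Cexpi; cbn [fst snd].
  pose proof (sin2_cos2 a) as Hs. unfold Rsqr in Hs.
  replace (cos a ^ 2 + sin a ^ 2) with 1 by nra. rewrite sqrt_1. ring.
Qed.

Lemma vnorm_Phi n Lam t v : vnorm n (PhiL Lam t v) = vnorm n v.
Proof. unfold vnorm, PhiL. f_equal. apply sumR_ext. intros. rewrite Cnorm_expi_mul. auto. Qed.

Lemma Phi_sub Lam t u v : vsub (PhiL Lam t u) (PhiL Lam t v) = PhiL Lam t (vsub u v).
Proof. vring. Qed.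

Lemma Phi_add Lam t s x : PhiL Lam (t + s) x = PhiL Lam t (PhiL Lam s x).
Proof.
  apply functional_extensionality; intro j. unfold PhiL, Cmul, Cexpi.
  replace (Lam j * (t + s)) with (Lam j * t + Lam j * s) by ring. rewrite cos_plus, sin_plus.
  apply injective_projections; simpl; ring.
Qed.

Lemma Phi_zero Lam x : PhiL Lam 0 x = x.
Proof.
  apply functional_extensionality; intro j. unfold PhiL, Cmul, Cexpi.
  rewrite Rmult_0_r, cos_0, sin_0. destruct (x j); simpl; f_equal; ring.
Qed.

Lemma Phi_inv Lam t v : PhiL Lam (- t) (PhiL Lam t v) = v.
Proof. rewrite <- Phi_add, Rplus_opp_l. apply Phi_zero. Qed.

Lemma Phi_neg Lam t x : PhiL (fun j => - Lam j) t x = PhiL Lam (- t) x.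
Proof. apply functional_extensionality; intro j. unfold PhiL. f_equal. f_equal. ring. Qed.

Definition Lsum (n : nat) (Lam : nat -> R) : R := sumR n (fun j => Rabs (Lam j)).

Lemma Lsum_nonneg n Lam : 0 <= Lsum n Lam.
Proof. apply sumR_nonneg. intros; apply Rabs_pos. Qed.

Lemma Phi_time_lip n Lam s t x :
  vnorm n (vsub (PhiL Lam s x) (PhiL Lam t x)) <= Lsum n Lam * Rabs (s - t) * vnorm n x.
Proof.
  pose proof (Lsum_nonneg n Lam). pose proof (Rabs_pos (s - t)).
  apply vnorm_pointwise; [nra|]. intros j Hj. unfold vsub, PhiL.
  replace (Csub (Cmul (Cexpi (Lam j * s)) (x j)) (Cmul (Cexpi (Lam j * t)) (x j))) with
    (Cmul (Csub (Cexpi (Lam j * s)) (Cexpi (Lam j * t))) (x j))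
    by (unfold Csub, Cmul; simpl; f_equal; ring).
  rewrite Cnorm_mul. apply Rmult_le_compat_r; [apply Cnorm_nonneg|].
  eapply Rle_trans; [apply Cexpi_sub_le|].
  replace (Lam j * s - Lam j * t) with (Lam j * (s - t)) by ring.
  rewrite Rabs_mult. apply Rmult_le_compat_r; [apply Rabs_pos|].
  apply (sumR_single_le n (fun j => Rabs (Lam j))); auto. intros; apply Rabs_pos.
Qed.

Lemma Phi_near_id n Lam tau x d : 0 <= d ->
  (forall j, (j < n)%nat -> Cnorm (Csub (Cexpi (Lam j * tau)) (1, 0)) <= d) ->
  vnorm n (vsub (PhiL Lam tau x) x) <= d * vnorm n x.
Proof.
  intros Hd H. apply vnorm_pointwise; auto. intros j Hj. unfold vsub, PhiL.
  replace (Csub (Cmul (Cexpi (Lam j * tau)) (x j)) (x j)) with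
    (Cmul (Csub (Cexpi (Lam j * tau)) (1, 0)) (x j))
    by (unfold Csub, Cmul; destruct (x j); simpl; f_equal; ring).
  rewrite Cnorm_mul. apply Rmult_le_compat_r; [apply Cnorm_nonneg|auto].
Qed.

Lemma cont_on_Phi n Lam u a b : cont_on n u a b -> cont_on n (fun s => PhiL Lam s (u s)) a b.
Proof.
  intros Hu t Ht e He. destruct (Hu t Ht (e / 2)) as [d1 [Hd1 H1]]; [lra|].
  pose proof (Lsum_nonneg n Lam). pose proof (vnorm_nonneg n (u t)).
  set (L := Lsum n Lam * vnorm n (u t) + 1).
  assert (HL : 0 < L) by (unfold L; nra).
  exists (Rmin d1 (e / (2 * L))). split; [apply Rmin_pos; auto; apply Rdiv_lt_0_compat; lra|].
  intros s Hs Hst.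
  eapply Rle_lt_trans; [apply (vnorm_tri n _ (PhiL Lam s (u t)))|].
  rewrite Phi_sub, vnorm_Phi.
  pose proof (H1 s Hs ltac:(eapply Rlt_le_trans; [apply Hst|apply Rmin_l])).
  pose proof (Phi_time_lip n Lam s t (u t)).
  assert (Rabs (s - t) < e / (2 * L)) by (eapply Rlt_le_trans; [apply Hst|apply Rmin_r]).
  assert (L * Rabs (s - t) < e / 2).
  { apply Rlt_le_trans with (L * (e / (2 * L))); [apply Rmult_lt_compat_l; auto|right; field; lra]. }
  assert (Lsum n Lam * Rabs (s - t) * vnorm n (u t) <= L * Rabs (s - t))
    by (unfold L; pose proof (Rabs_pos (s - t)); nra).
  lra.
Qed.

Lemma deriv_Phi n Lam (v : R -> nat -> Cx) dv t : deriv_at n v t dv ->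
  deriv_at n (fun s => PhiL Lam s (v s)) t
    (fun j => Cadd (Cmul (Cexpi (Lam j * t)) (dv j))
                   (Cmul (0, Lam j) (Cmul (Cexpi (Lam j * t)) (v t j)))).
Proof.
  intros H j Hj. destruct (H j Hj) as [H1 H2].
  unfold PhiL, Cmul, Cadd, Cexpi, Cre, Cim in *; cbn [fst snd] in *.
  assert (Hc : derivable_pt_lim (fun s => cos (Lam j * s)) t (- Lam j * sin (Lam j * t)))
    by (apply is_derive_Reals; auto_derive; auto; ring).
  assert (Hs : derivable_pt_lim (fun s => sin (Lam j * s)) t (Lam j * cos (Lam j * t)))
    by (apply is_derive_Reals; auto_derive; auto; ring).
  split.
  - match goal with |- derivable_pt_lim _ _ ?l => replace l with
      ((- Lam j * sin (Lam j * t) * fst (v t j) + cos (Lam j * t) * fst (dv j)) -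
       (Lam j * cos (Lam j * t) * snd (v t j) + sin (Lam j * t) * snd (dv j))) by ring end.
    apply (derivable_pt_lim_minus (fun s => cos (Lam j * s) * fst (v s j))
                                  (fun s => sin (Lam j * s) * snd (v s j)));
      apply (derivable_pt_lim_mult (fun s => _ (Lam j * s))); auto.
  - match goal with |- derivable_pt_lim _ _ ?l => replace l with
      ((- Lam j * sin (Lam j * t) * snd (v t j) + cos (Lam j * t) * snd (dv j)) +
       (Lam j * cos (Lam j * t) * fst (v t j) + sin (Lam j * t) * fst (dv j))) by ring end.
    apply (derivable_pt_lim_plus (fun s => cos (Lam j * s) * snd (v s j))
                                 (fun s => sin (Lam j * s) * fst (v s j)));
      apply (derivable_pt_lim_mult (fun s => _ (Lam j * s))); auto.
Qed.

Lemma continuous_induction (f : R -> R) M T : 0 <= T -> rcont f 0 T -> f 0 <= M ->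
  (forall s, 0 <= s < T -> (forall t, 0 <= t <= s -> f t <= M) -> f s < M) ->
  forall t, 0 <= t <= T -> f t <= M.
Proof.
  intros HT Hc Hf0 Hstep.
  set (S := fun s => 0 <= s <= T /\ forall t, 0 <= t <= s -> f t <= M).
  assert (HS0 : S 0) by (split; [lra|intros t Ht; replace t with 0 by lra; auto]).
  assert (Hb : bound S) by (exists T; intros x [Hx _]; lra).
  destruct (completeness S Hb (ex_intro _ 0 HS0)) as [sig [Hub Hlub]].
  assert (Hsig0 : 0 <= sig) by (apply Hub; auto).
  assert (HsigT : sig <= T) by (apply Hlub; intros x [Hx _]; lra).
  assert (Hbelow : forall t, 0 <= t < sig -> f t <= M).
  { intros t Ht. destruct (classic (exists s, S s /\ t < s)) as [[s [[_ Hs] Hts]]|Hno].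
    - apply Hs. lra.
    - exfalso. assert (sig <= t); [|lra]. apply Hlub. intros x Hx.
      apply Rnot_lt_le. intro. apply Hno. eauto. }
  assert (Hat : f sig <= M).
  { destruct (Req_dec sig 0) as [->|Hne]; auto. apply Rnot_lt_le. intro Hgt.
    destruct (Hc sig ltac:(lra) (f sig - M) ltac:(lra)) as [dd [Hdd Hdd']].
    set (t := Rmax 0 (sig - dd / 2)).
    assert (0 <= t < sig) by (unfold t, Rmax; destruct Rle_dec; lra).
    assert (Rabs (t - sig) < dd) by (unfold t, Rmax; destruct Rle_dec; apply Rabs_def1; lra).
    specialize (Hdd' t ltac:(lra) ltac:(auto)). apply Rabs_lt_between' in Hdd'.
    pose proof (Hbelow t ltac:(lra)). lra. }
  assert (HSsig : S sig).
  { split; [lra|]. intros t Ht. destruct (Req_dec t sig) as [->|]; auto. apply Hbelow; lra. }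
  destruct (Req_dec sig T) as [<-|Hlt]; [apply HSsig|].
  exfalso. assert (Hstrict : f sig < M) by (apply Hstep; [lra|apply HSsig]).
  destruct (Hc sig ltac:(lra) (M - f sig) ltac:(lra)) as [dd [Hdd Hdd']].
  set (s' := Rmin (sig + dd / 2) T).
  assert (Hs'S : S s').
  { split; [unfold s', Rmin; destruct Rle_dec; lra|]. intros t Ht.
    destruct (Rle_dec t sig); [apply HSsig; lra|].
    assert (Rabs (t - sig) < dd) by (unfold s', Rmin in Ht; destruct Rle_dec; apply Rabs_def1; lra).
    assert (t <= T) by (unfold s', Rmin in Ht; destruct Rle_dec; lra).
    specialize (Hdd' t ltac:(lra) ltac:(auto)). apply Rabs_lt_between' in Hdd'. lra. }
  pose proof (Hub s' Hs'S). unfold s', Rmin in *; destruct Rle_dec; lra.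
Qed.

Lemma rcont_vnorm n u a b : cont_on n u a b -> rcont (fun t => vnorm n (u t)) a b.
Proof.
  intros Hu t Ht e He. destruct (Hu t Ht e He) as [d [Hd Hd']]. exists d. split; auto.
  intros s Hs Hst. eapply Rle_lt_trans; [apply vnorm_rev_tri|auto].
Qed.

Section APrioriBound.
Variables (n : nat) (X : R -> R) (c T Rad : R).
Hypotheses (HXmono : forall r s, 0 <= r -> r <= s -> X r <= X s)
  (HX2R : 0 <= X (2 * Rad)) (Hc : 0 <= c) (HT : 0 <= T) (HR : 0 < Rad)
  (HcT : c * T * X (2 * Rad) <= Rad).

Lemma stay_bounded (u d : R -> nat -> Cx) :
  cont_on n u 0 T -> (forall t, 0 < t < T -> deriv_at n u t (d t)) ->
  (forall t, 0 < t < T -> vnorm n (d t) <= c * X (vnorm n (u t))) ->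
  vnorm n (u 0) <= Rad -> forall t, 0 <= t <= T -> vnorm n (u t) <= 2 * Rad.
Proof.
  intros Hcont Hder Hspeed Hu0.
  apply (continuous_induction (fun t => vnorm n (u t))); auto using rcont_vnorm; [lra|].
  intros s Hs Hbnd.
  assert (Hmv : vnorm n (vsub (u s) (u 0)) <= c * X (2 * Rad) * (s - 0)).
  { apply (mvi n u d); [lra|apply (cont_on_sub n u 0 T); auto; lra|intros; apply Hder; lra|].
    intros t Ht. eapply Rle_trans; [apply Hspeed; lra|]. apply Rmult_le_compat_l; auto.
    apply HXmono; [apply vnorm_nonneg|apply Hbnd; lra]. }
  pose proof (vnorm_tri n (u s) (u 0) vzero). rewrite !vsub_zero_r in *.
  assert (c * X (2 * Rad) * s < Rad); [|lra].
  assert (HcX : 0 <= c * X (2 * Rad)) by (apply Rmult_le_pos; auto).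
  destruct (Req_dec (c * X (2 * Rad)) 0) as [->|]; [lra|].
  apply Rlt_le_trans with (c * X (2 * Rad) * T); [apply Rmult_lt_compat_l; lra|nra].
Qed.

Lemma stay_bounded_sym (u d : R -> nat -> Cx) :
  cont_on n u (- T) T -> (forall t, - T < t < T -> deriv_at n u t (d t)) ->
  (forall t, - T < t < T -> vnorm n (d t) <= c * X (vnorm n (u t))) ->
  vnorm n (u 0) <= Rad -> forall t, - T <= t <= T -> vnorm n (u t) <= 2 * Rad.
Proof.
  intros Hcont Hder Hspeed Hu0 t Ht. destruct (Rle_dec 0 t).
  - apply (stay_bounded u d); auto; [apply (cont_on_sub n u (- T) T); auto; lra
                                   |intros; apply Hder; lra|intros; apply Hspeed; lra|lra].
  - replace t with (- - t) by ring.
    apply (stay_bounded (fun s => u (- s)) (fun s => vscale (-1) (d (- s)))); [| | |rewrite Ropp_0|]; auto.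
    + apply cont_on_refl_sym; auto.
    + intros s Hs. apply deriv_refl. apply Hder. lra.
    + intros s Hs. rewrite vnorm_neg. apply Hspeed. lra.
    + lra.
Qed.

End APrioriBound.

(** Its resonant average is
    [<<P>>]; it inherits bounds and Lipschitz constants of [P], and it is almost
    periodic: shifting [t] by [tau] changes it little when [Phi_{Lambda tau}] is
    close to the identity. *)

Definition Yf (Lam : nat -> R) (P : (nat -> Cx) -> nat -> Cx) (t : R) (x : nat -> Cx) : nat -> Cx :=
  PhiL Lam t (P (PhiL Lam (- t) x)).

Section VectorFieldY.
Variables (n : nat) (Lam : nat -> R) (P : (nat -> Cx) -> nat -> Cx) (K Rad : R).
Hypotheses (HPb : forall x, vnorm n x <= 2 * Rad -> vnorm n (P x) <= K)
  (HPl : forall x y, vnorm n x <= 2 * Rad -> vnorm n y <= 2 * Rad ->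
          vnorm n (vsub (P x) (P y)) <= K * vnorm n (vsub x y)).

Lemma Y_bound t x : vnorm n x <= 2 * Rad -> vnorm n (Yf Lam P t x) <= K.
Proof. intros. unfold Yf. rewrite vnorm_Phi. apply HPb. rewrite vnorm_Phi. auto. Qed.

Lemma Y_lip t x y : vnorm n x <= 2 * Rad -> vnorm n y <= 2 * Rad ->
  vnorm n (vsub (Yf Lam P t x) (Yf Lam P t y)) <= K * vnorm n (vsub x y).
Proof.
  intros. unfold Yf. rewrite Phi_sub, vnorm_Phi.
  rewrite <- (vnorm_Phi n Lam (- t) (vsub x y)), <- Phi_sub. apply HPl; rewrite vnorm_Phi; auto.
Qed.

Lemma Y_shift t tau b d : vnorm n b <= 2 * Rad -> 0 <= d ->
  (forall j, (j < n)%nat -> Cnorm (Csub (Cexpi (Lam j * tau)) (1, 0)) <= d) ->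
  vnorm n (vsub (Yf Lam P (t + tau) b) (Yf Lam P t b)) <= d * K * (2 * Rad + 1).
Proof.
  intros Hb Hd Hj. unfold Yf.
  set (c := PhiL Lam (- t) b).
  assert (Hc : vnorm n c <= 2 * Rad) by (unfold c; rewrite vnorm_Phi; auto).
  rewrite (Phi_add Lam t tau).
  replace (- (t + tau)) with (- tau + - t) by ring. rewrite (Phi_add Lam (- tau) (- t)). fold c.
  rewrite Phi_sub, vnorm_Phi.
  eapply Rle_trans; [apply (vnorm_tri n _ (PhiL Lam tau (P c)))|].
  rewrite Phi_sub, vnorm_Phi.
  assert (Hm : forall j, (j < n)%nat -> Cnorm (Csub (Cexpi (Lam j * - tau)) (1, 0)) <= d).
  { intros j Hjn. replace (Lam j * - tau) with (- (Lam j * tau)) by ring.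
    rewrite Cexpi_neg_sub1. auto. }
  assert (Hc' : vnorm n (PhiL Lam (- tau) c) <= 2 * Rad) by (rewrite vnorm_Phi; auto).
  pose proof (Phi_near_id n Lam (- tau) c d Hd Hm) as H1.
  pose proof (Phi_near_id n Lam tau (P c) d Hd Hj) as H2.
  pose proof (HPl _ _ Hc' Hc). pose proof (HPb c Hc).
  assert (K * vnorm n (vsub (PhiL Lam (- tau) c) c) <= K * (d * (2 * Rad))).
  { pose proof (vnorm_nonneg n (P c)). apply Rmult_le_compat_l; [nra|].
    eapply Rle_trans; [apply H1|]. apply Rmult_le_compat_l; auto. }
  assert (d * vnorm n (P c) <= d * K) by (apply Rmult_le_compat_l; auto).
  nra.
Qed.

End VectorFieldY.

Definition fast_field (Lam : nat -> R) (P : (nat -> Cx) -> nat -> Cx) (eps : R) (v : nat -> Cx)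
  : nat -> Cx := fun j => Cadd (Cmul (0, - Lam j) (v j)) (Cscale eps (P v j)).

Lemma fast_to_slow n Lam P eps (v : R -> nat -> Cx) t :
  deriv_at n v t (fast_field Lam P eps (v t)) ->
  deriv_at n (fun s => PhiL Lam s (v s)) t (vscale eps (Yf Lam P t (PhiL Lam t (v t)))).
Proof.
  intros Hv. eapply deriv_at_ext_d; [|apply deriv_Phi, Hv].
  intros j Hj. unfold Yf. rewrite Phi_inv.
  unfold fast_field, vscale, PhiL, Cadd, Cmul, Cscale. apply injective_projections; cbn [fst snd]; ring.
Qed.

Lemma slow_to_fast n Lam P eps (u : R -> nat -> Cx) t :
  deriv_at n u t (vscale eps (Yf Lam P t (u t))) ->
  deriv_at n (fun s => PhiL Lam (- s) (u s)) t (fast_field Lam P eps (PhiL Lam (- t) (u t))).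
Proof.
  intros Hu.
  apply (deriv_at_ext n _ (fun s => PhiL (fun j => - Lam j) s (u s))); [intros; rewrite Phi_neg; auto|].
  eapply deriv_at_ext_d; [|apply deriv_Phi, Hu].
  intros j Hj. unfold Yf, fast_field. set (p := P (PhiL Lam (- t) (u t))).
  unfold vscale, PhiL, Cadd, Cmul, Cscale, Cexpi. cbn [fst snd].
  replace (- Lam j * t) with (- (Lam j * t)) by ring. replace (Lam j * - t) with (- (Lam j * t)) by ring.
  rewrite cos_neg, sin_neg.
  pose proof (sin2_cos2 (Lam j * t)) as Hsc. unfold Rsqr in Hsc.
  pose proof (f_equal (fun x => x * (eps * fst (p j))) Hsc).
  pose proof (f_equal (fun x => x * (eps * snd (p j))) Hsc).
  apply injective_projections; cbn [fst snd] in *; lra.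
Qed.

Lemma exists_nat_gt x : exists N : nat, x < INR N.
Proof.
  destruct (archimed x) as [H1 _]. destruct (Z_le_gt_dec (up x) 0).
  - exists 0%nat. simpl. apply IZR_le in l. lra.
  - exists (Z.to_nat (up x)). rewrite INR_IZR_INZ, Z2Nat.id by lia. lra.
Qed.

Lemma pow_le_exp q N : 0 <= q -> (1 + q) ^ N <= exp (q * INR N).
Proof.
  intros Hq. induction N; [simpl; rewrite Rmult_0_r, exp_0; lra|].
  rewrite S_INR. replace (q * (INR N + 1)) with (q * INR N + q) by ring. rewrite exp_plus.
  pose proof (exp_ineq1_le q). pose proof (pow_le (1 + q) N ltac:(lra)).
  simpl. rewrite Rmult_comm. apply Rmult_le_compat; auto; lra.
Qed.

Lemma discrete_gronwall (e : nat -> R) q r N : 0 <= q -> 0 <= r -> e 0%nat <= 0 ->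
  (forall k, (k < N)%nat -> e (S k) <= (1 + q) * e k + r) ->
  forall k, (k <= N)%nat -> e k <= INR N * r * exp (q * INR N).
Proof.
  intros Hq Hr H0 Hs.
  assert (Hind : forall k, (k <= N)%nat -> e k <= INR k * r * (1 + q) ^ k).
  { induction k; intros Hk; [simpl; lra|].
    rewrite S_INR. specialize (IHk ltac:(lia)). specialize (Hs k ltac:(lia)).
    pose proof (pow_R1_Rle (1 + q) (S k) ltac:(lra)). pose proof (pos_INR k).
    pose proof (pow_le (1 + q) k ltac:(lra)). simpl in *. nra. }
  intros k Hk. eapply Rle_trans; [apply Hind; auto|].
  pose proof (le_INR _ _ Hk). pose proof (pos_INR k).
  pose proof (Rle_pow (1 + q) k N ltac:(lra) Hk). pose proof (pow_le (1 + q) k ltac:(lra)).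
  pose proof (pow_le_exp q N Hq).
  apply Rmult_le_compat; [nra|nra|apply Rmult_le_compat_r; auto|lra].
Qed.

Lemma node_cover N H t : (0 < N)%nat -> 0 < H -> 0 <= t <= INR N * H ->
  exists k, (k < N)%nat /\ INR k * H <= t <= (INR k + 1) * H.
Proof.
  intros HN HH. induction N as [|N IH]; [lia|].
  intros Ht. destruct (Nat.eq_dec N 0) as [->|Hne].
  - exists 0%nat. simpl in *. split; [lia|lra].
  - rewrite S_INR in Ht. destruct (Rle_dec t (INR N * H)).
    + destruct IH as [k [Hk Hk']]; [lia|lra|]. exists k. split; [lia|auto].
    + exists N. split; [lia|lra].
Qed.

Lemma mean_node_bound n (G : R -> nat -> Cx) (w : nat -> Cx) e' T0 T :
  (forall j, (j < n)%nat -> G 0 j = C0) -> 0 <= e' -> 0 <= T0 ->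
  (forall T, T0 < T -> vnorm n (vsub (vscale (/ T) (G T)) w) <= e') ->
  T = 0 \/ T0 < T -> vnorm n (vsub (G T) (vscale T w)) <= T * e'.
Proof.
  intros HG0 He' HT0 Hm [->|HT].
  - rewrite Rmult_0_l, (vnorm_ext n _ vzero), vnorm_zero; [lra|].
    intros j Hj. unfold vsub. rewrite HG0 by auto. unfold vscale, Cscale, vzero, Csub, C0; simpl. f_equal; ring.
  - replace (vsub (G T) (vscale T w)) with (vscale T (vsub (vscale (/ T) (G T)) w)).
    + rewrite vnorm_scale, Rabs_pos_eq by lra. apply Rmult_le_compat_l; [lra|auto].
    + apply functional_extensionality; intro j. unfold vsub, vscale, Csub, Cscale.
      apply injective_projections; simpl; field; lra.
Qed.

Definition has_mean (n : nat) (G : R -> nat -> Cx) (w : nat -> Cx) : Prop :=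
  forall e, 0 < e -> exists T0, forall T, T0 < T -> vnorm n (vsub (vscale (/ T) (G T)) w) <= e.

(** The proof compares [a]
    and [b] on a grid of [N] cells: on each cell the field is frozen at
    [b (k h)], its time average replaces it up to [e'], and the errors are
    summed by the discrete Gronwall inequality. *)

Section AveragingCore.
Variables (n : nat) (F : R -> (nat -> Cx) -> nat -> Cx) (b W : R -> nat -> Cx) (K Rad th : R).
Hypotheses (HK : 0 < K) (Hth : 0 < th)
  (HFb : forall t x, vnorm n x <= 2 * Rad -> vnorm n (F t x) <= K)
  (HFl : forall t x y, vnorm n x <= 2 * Rad -> vnorm n y <= 2 * Rad ->
           vnorm n (vsub (F t x) (F t y)) <= K * vnorm n (vsub x y))
  (Hbc : cont_on n b 0 th)
  (Hbd : forall tau, 0 < tau < th -> deriv_at n b tau (W tau))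
  (Hbb : forall tau, 0 <= tau <= th -> vnorm n (b tau) <= 2 * Rad)
  (HWb : forall tau, 0 <= tau < th -> vnorm n (W tau) <= K)
  (HWl : forall tau sig, 0 <= tau < th -> 0 <= sig < th ->
           vnorm n (vsub (W tau) (W sig)) <= K * vnorm n (vsub (b tau) (b sig)))
  (Hmean : forall tau, 0 <= tau < th -> exists G : R -> nat -> Cx,
      (forall j, (j < n)%nat -> G 0 j = C0) /\ (forall t, deriv_at n G t (F t (b tau))) /\
      has_mean n G (W tau)).

Lemma b_lip sig tau : 0 <= sig <= tau -> tau <= th -> vnorm n (vsub (b tau) (b sig)) <= K * (tau - sig).
Proof.
  intros Hs Ht. apply (mvi n b W); [lra|apply (cont_on_sub n b 0 th); auto; lra| |];
  intros; [apply Hbd|apply HWb]; lra.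
Qed.

Lemma b_drift s0 s1 : 0 <= s0 <= s1 -> s1 <= th -> s0 < th ->
  vnorm n (vsub (vsub (b s1) (vscale s1 (W s0))) (vsub (b s0) (vscale s0 (W s0))))
    <= K * K * (s1 - s0) * (s1 - s0).
Proof.
  intros Hs Hs1 Hs0.
  apply (mvi n (fun tau => vsub (b tau) (vscale tau (W s0))) (fun tau => vsub (W tau) (W s0)));
    [lra| | |].
  - apply cont_on_vsub; [apply (cont_on_sub n b 0 th); auto; lra|apply cont_on_lin].
  - intros tau Htau. apply deriv_vsub; [apply Hbd; lra|apply deriv_lin].
  - intros tau Htau. eapply Rle_trans; [apply HWl; lra|].
    rewrite Rmult_assoc. apply Rmult_le_compat_l; [lra|].
    eapply Rle_trans; [apply b_lip; lra|]. apply Rmult_le_compat_l; lra.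
Qed.

Lemma slow_lip eps (a : R -> nat -> Cx) t0 t1 : 0 < eps -> cont_on n a t0 t1 ->
  (forall t, t0 < t < t1 -> deriv_at n a t (vscale eps (F t (a t)))) ->
  (forall t, t0 <= t <= t1 -> vnorm n (a t) <= 2 * Rad) ->
  forall s t, t0 <= s <= t -> t <= t1 -> vnorm n (vsub (a t) (a s)) <= eps * K * (t - s).
Proof.
  intros Heps Hac Had Hab s t Hs Ht.
  apply (mvi n a (fun t => vscale eps (F t (a t)))); [lra|apply (cont_on_sub n a t0 t1); auto; lra| |].
  - intros; apply Had; lra.
  - intros tau Htau. rewrite vnorm_scale, Rabs_pos_eq by lra.
    apply Rmult_le_compat_l; [lra|]. apply HFb, Hab. lra.
Qed.

Lemma frozen_drift eps (a G : R -> nat -> Cx) s0 t0 t1 : 0 < eps -> t0 <= t1 ->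
  0 <= s0 <= th -> cont_on n a t0 t1 ->
  (forall t, t0 < t < t1 -> deriv_at n a t (vscale eps (F t (a t)))) ->
  (forall t, t0 <= t <= t1 -> vnorm n (a t) <= 2 * Rad) ->
  (forall t, deriv_at n G t (F t (b s0))) ->
  vnorm n (vsub (vsub (a t1) (vscale eps (G t1))) (vsub (a t0) (vscale eps (G t0))))
    <= eps * K * (eps * K * (t1 - t0) + vnorm n (vsub (a t0) (b s0))) * (t1 - t0).
Proof.
  intros Heps Ht Hs Hac Had Hab HG.
  assert (HGc : cont_on n G t0 t1) by (apply (deriv_cont n G (fun t => F t (b s0))); auto).
  apply (mvi n (fun s => vsub (a s) (vscale eps (G s)))
           (fun s => vsub (vscale eps (F s (a s))) (vscale eps (F s (b s0))))); [lra| | |].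
  - apply cont_on_vsub; [auto|apply cont_on_vscale; auto].
  - intros s Hs'. apply deriv_vsub; [apply Had; auto|apply deriv_vscale; apply HG].
  - intros s Hs'.
    replace (vsub (vscale eps (F s (a s))) (vscale eps (F s (b s0))))
      with (vscale eps (vsub (F s (a s)) (F s (b s0)))) by vring.
    rewrite vnorm_scale, Rabs_pos_eq, Rmult_assoc by lra. apply Rmult_le_compat_l; [lra|].
    eapply Rle_trans; [apply HFl; [apply Hab; lra|apply Hbb; lra]|].
    apply Rmult_le_compat_l; [lra|].
    eapply Rle_trans; [apply (vnorm_tri n _ (a t0))|].
    pose proof (slow_lip eps a t0 t1 Heps Hac Had Hab t0 s ltac:(lra) ltac:(lra)).
    assert (0 <= eps * K) by nra. nra.
Qed.

(* One grid cell [[s0, s0 + h]] in slow time, i.e. [[s0/eps, (s0 + h)/eps]] in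
   fast time: the error grows by the factor [1 + K h], plus the cost of
   linearizing [b], plus the averaging error at both nodes. *)
Lemma avg_one_step eps e' h s0 (a G : R -> nat -> Cx) :
  0 < eps -> 0 < h -> 0 <= s0 -> s0 + h <= th ->
  cont_on n a (s0 / eps) ((s0 + h) / eps) ->
  (forall t, s0 / eps < t < (s0 + h) / eps -> deriv_at n a t (vscale eps (F t (a t)))) ->
  (forall t, s0 / eps <= t <= (s0 + h) / eps -> vnorm n (a t) <= 2 * Rad) ->
  (forall t, deriv_at n G t (F t (b s0))) ->
  vnorm n (vsub (G (s0 / eps)) (vscale (s0 / eps) (W s0))) <= s0 / eps * e' ->
  vnorm n (vsub (G ((s0 + h) / eps)) (vscale ((s0 + h) / eps) (W s0))) <= (s0 + h) / eps * e' ->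
  vnorm n (vsub (a ((s0 + h) / eps)) (b (s0 + h)))
    <= (1 + K * h) * vnorm n (vsub (a (s0 / eps)) (b s0)) + 2 * K ^ 2 * h ^ 2 + (2 * s0 + h) * e'.
Proof.
  intros Heps Hh Hs0 Hs1 Hac Had Hab HG HG0 HG1.
  set (t0 := s0 / eps) in *. set (t1 := (s0 + h) / eps) in *.
  assert (Ht10 : eps * (t1 - t0) = h) by (unfold t0, t1; field; lra).
  assert (Ht0 : 0 <= t0) by (unfold t0; apply Rdiv_le_0_compat; lra).
  set (e0 := vnorm n (vsub (a t0) (b s0))).
  assert (Hfroz := frozen_drift eps a G s0 t0 t1 Heps ltac:(nra) ltac:(lra) Hac Had Hab HG).
  assert (Hlin := b_drift s0 (s0 + h) ltac:(lra) Hs1 ltac:(lra)).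
  assert (Havg : vnorm n (vsub (vscale eps (vsub (G t1) (G t0))) (vscale h (W s0)))
                   <= (2 * s0 + h) * e').
  { replace (vsub (vscale eps (vsub (G t1) (G t0))) (vscale h (W s0))) with
      (vscale eps (vadd (vsub (G t1) (vscale t1 (W s0))) (vscale (-1) (vsub (G t0) (vscale t0 (W s0))))))
      by (apply functional_extensionality; intro j; unfold vsub, vadd, vscale, Csub, Cadd, Cscale;
          apply injective_projections; simpl; rewrite <- Ht10; ring).
    rewrite vnorm_scale, Rabs_pos_eq by lra.
    eapply Rle_trans; [apply Rmult_le_compat_l; [lra|apply vnorm_add]|]. rewrite vnorm_neg.
    replace ((2 * s0 + h) * e') with (eps * (t1 * e' + t0 * e')) by (unfold t0, t1; field; lra).
    apply Rmult_le_compat_l; lra. }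
  replace (vsub (a t1) (b (s0 + h))) with
    (vadd (vadd (vadd (vsub (a t0) (b s0))
                      (vsub (vsub (a t1) (vscale eps (G t1))) (vsub (a t0) (vscale eps (G t0)))))
                (vsub (vscale eps (vsub (G t1) (G t0))) (vscale h (W s0))))
          (vscale (-1) (vsub (vsub (b (s0 + h)) (vscale (s0 + h) (W s0))) (vsub (b s0) (vscale s0 (W s0))))))
    by (apply functional_extensionality; intro j; unfold vsub, vadd, vscale, Csub, Cadd, Cscale;
        apply injective_projections; simpl; ring).
  eapply Rle_trans; [apply vnorm_add|]. rewrite vnorm_neg.
  eapply Rle_trans; [apply Rplus_le_compat_r, vnorm_add3|]. fold e0 in Hfroz |- *.
  replace (eps * K * (eps * K * (t1 - t0) + e0) * (t1 - t0)) with (K * h * (K * h + e0)) in Hfroz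
    by (rewrite <- Ht10; ring).
  replace (s0 + h - s0) with h in Hlin by ring. nra.
Qed.

(* The choice of the grid: [2 K th/N] plus the accumulated error fits in [eta]. *)
Lemma avg_budget K' th' eta E N : 0 < K' -> 0 < th' -> 0 < eta -> 0 < E -> 1 < N ->
  (4 * K' * th' + 4 * th' * E * K' ^ 2 * th') / eta < N ->
  2 * K' * (th' / N) + th' * (2 * K' ^ 2 * (th' / N) + 2 * N * (eta / (4 * N * th' * E))) * E <= eta.
Proof.
  intros HK' Hth' Heta HE HN1 HN2.
  replace (2 * K' * (th' / N) + th' * (2 * K' ^ 2 * (th' / N) + 2 * N * (eta / (4 * N * th' * E))) * E)
    with ((2 * K' * th' + 2 * th' * E * K' ^ 2 * th') / N + eta / 2) by (field; repeat split; lra).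
  assert ((2 * K' * th' + 2 * th' * E * K' ^ 2 * th') / N <= eta / 2); [|lra].
  apply Rmult_le_reg_r with N; [lra|]. unfold Rdiv. rewrite Rmult_assoc, Rinv_l by lra.
  apply Rmult_lt_compat_r with (r := eta) in HN2; auto. unfold Rdiv in HN2.
  rewrite Rmult_assoc, Rinv_l in HN2 by lra. nra.
Qed.

Lemma grid_error N h e' T0 eps (a : R -> nat -> Cx) :
  (0 < N)%nat -> 0 < h -> INR N * h = th -> 0 <= e' -> 0 <= T0 -> 0 < eps -> T0 < h / eps ->
  (forall k, (k < N)%nat -> exists G : R -> nat -> Cx,
      (forall j, (j < n)%nat -> G 0 j = C0) /\ (forall t, deriv_at n G t (F t (b (INR k * h)))) /\
      (forall T, T0 < T -> vnorm n (vsub (vscale (/ T) (G T)) (W (INR k * h))) <= e')) ->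
  cont_on n a 0 (th / eps) ->
  (forall t, 0 < t < th / eps -> deriv_at n a t (vscale eps (F t (a t)))) ->
  (forall t, 0 <= t <= th / eps -> vnorm n (a t) <= 2 * Rad) ->
  vnorm n (vsub (a 0) (b 0)) = 0 ->
  forall k, (k <= N)%nat -> vnorm n (vsub (a (INR k * h / eps)) (b (INR k * h)))
    <= th * (2 * K ^ 2 * h + 2 * INR N * e') * exp (K * th).
Proof.
  intros HN0 Hh HNh He' HT0 Heps HH Hnodes Hac Had Hab Ha0.
  assert (Hnode : forall k, (k < N)%nat -> 0 <= INR k * h /\ INR k * h + h <= th).
  { intros k Hk. pose proof (pos_INR k).
    assert (INR k + 1 <= INR N) by (rewrite <- S_INR; apply le_INR; lia).
    split; [nra|]. rewrite <- HNh. nra. }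
  assert (HT0eps : forall k : nat, INR k * h / eps = 0 \/ T0 < INR k * h / eps).
  { intros k. destruct k; [left; simpl; field; lra|right].
    apply Rlt_le_trans with (h / eps); auto. unfold Rdiv. apply Rmult_le_compat_r;
      [left; apply Rinv_0_lt_compat; lra|rewrite S_INR; pose proof (pos_INR k); nra]. }
  assert (Hdiv : forall s, 0 <= s <= th -> 0 <= s / eps <= th / eps)
    by (intros s Hs; split; unfold Rdiv; [apply Rmult_le_pos|apply Rmult_le_compat_r];
        try lra; left; apply Rinv_0_lt_compat; lra).
  set (ek := fun k : nat => vnorm n (vsub (a (INR k * h / eps)) (b (INR k * h)))).
  set (c := 2 * K ^ 2 * h + 2 * INR N * e').
  assert (Hstep : forall k, (k < N)%nat -> ek (S k) <= (1 + K * h) * ek k + h * c).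
  { intros k Hk. destruct (Hnode k Hk) as [Hk0 Hk1]. destruct (Hnodes k Hk) as [G [G1 [G2 G3]]].
    pose proof (Hdiv (INR k * h) ltac:(lra)). pose proof (Hdiv (INR k * h + h) ltac:(lra)).
    unfold ek. rewrite S_INR. replace ((INR k + 1) * h) with (INR k * h + h) by ring.
    eapply Rle_trans.
    - apply (avg_one_step eps e' h (INR k * h) a G); auto.
      + apply (cont_on_sub n a 0 (th / eps)); auto; lra.
      + intros; apply Had; lra.
      + intros; apply Hab; lra.
      + apply (mean_node_bound n G _ e' T0); auto.
      + apply (mean_node_bound n G _ e' T0); auto.
        replace (INR k * h + h) with (INR (S k) * h) by (rewrite S_INR; ring). apply HT0eps.
    - assert ((2 * INR k + 1) * e' <= 2 * INR N * e').
      { assert (INR k + 1 <= INR N) by (rewrite <- S_INR; apply le_INR; lia). nra. }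
      unfold c. nra. }
  intros k Hk. eapply Rle_trans.
  - apply (discrete_gronwall ek (K * h) (h * c) N); auto; [nra|unfold c; nra|].
    unfold ek. simpl. rewrite !Rmult_0_l, Rdiv_0_l. lra.
  - rewrite <- HNh. right. f_equal; [ring|f_equal; ring].
Qed.

Lemma uniform_averaging_time N h e' : 0 < e' -> 0 < h -> INR N * h = th ->
  exists T0, 0 <= T0 /\ forall k, (k < N)%nat -> exists G : R -> nat -> Cx,
    (forall j, (j < n)%nat -> G 0 j = C0) /\ (forall t, deriv_at n G t (F t (b (INR k * h)))) /\
    (forall T, T0 < T -> vnorm n (vsub (vscale (/ T) (G T)) (W (INR k * h))) <= e').
Proof.
  intros He' Hh HNh.
  apply (finite_max (fun k T0 => exists G : R -> nat -> Cx,
      (forall j, (j < n)%nat -> G 0 j = C0) /\ (forall t, deriv_at n G t (F t (b (INR k * h)))) /\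
      (forall T, T0 < T -> vnorm n (vsub (vscale (/ T) (G T)) (W (INR k * h))) <= e')) N).
  - intros j d d' Hdd [G [G1 [G2 G3]]]. exists G. do 2 (split; [auto|]). intros T HT. apply G3. lra.
  - intros k Hk. destruct (Hmean (INR k * h)) as [G [G1 [G2 G3]]].
    + pose proof (pos_INR k). assert (INR k + 1 <= INR N) by (rewrite <- S_INR; apply le_INR; lia).
      split; [nra|]. rewrite <- HNh. nra.
    + destruct (G3 e' He') as [T1 HT1]. exists T1, G. auto.
Qed.

Lemma cell_interpolation eps (a : R -> nat -> Cx) s0 h t :
  0 < eps -> 0 < h -> 0 <= s0 -> s0 + h <= th -> s0 / eps <= t <= (s0 + h) / eps ->
  cont_on n a 0 (th / eps) ->
  (forall t, 0 < t < th / eps -> deriv_at n a t (vscale eps (F t (a t)))) ->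
  (forall t, 0 <= t <= th / eps -> vnorm n (a t) <= 2 * Rad) ->
  vnorm n (vsub (a t) (b (eps * t))) <= 2 * K * h + vnorm n (vsub (a (s0 / eps)) (b s0)).
Proof.
  intros Heps Hh Hs0 Hs1 Ht Hac Had Hab.
  assert (Hepst : s0 <= eps * t <= s0 + h).
  { split; apply Rmult_le_reg_r with (/ eps); try (apply Rinv_0_lt_compat; lra);
    replace (eps * t * / eps) with t by (field; lra); unfold Rdiv in Ht; lra. }
  assert (Hthe : (s0 + h) / eps <= th / eps)
    by (unfold Rdiv; apply Rmult_le_compat_r; [left; apply Rinv_0_lt_compat|]; lra).
  eapply Rle_trans; [apply (vnorm_tri n _ (a (s0 / eps)))|].
  eapply Rle_trans; [apply Rplus_le_compat_l, (vnorm_tri n _ (b s0))|].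
  pose proof (slow_lip eps a 0 (th / eps) Heps Hac Had Hab (s0 / eps) t
                ltac:(split; [apply Rdiv_le_0_compat|]; lra) ltac:(lra)) as A1.
  replace (eps * K * (t - s0 / eps)) with (K * (eps * t - s0)) in A1 by (field; lra).
  pose proof (b_lip s0 (eps * t) ltac:(lra) ltac:(lra)) as A2. rewrite vnorm_sub_sym in A2.
  assert (K * (eps * t - s0) <= K * h) by (apply Rmult_le_compat_l; lra).
  lra.
Qed.

Lemma avg_core eta : 0 < eta -> exists delta, 0 < delta /\ forall eps, 0 < eps < delta ->
  forall a : R -> nat -> Cx, cont_on n a 0 (th / eps) ->
  (forall t, 0 < t < th / eps -> deriv_at n a t (vscale eps (F t (a t)))) ->
  (forall t, 0 <= t <= th / eps -> vnorm n (a t) <= 2 * Rad) ->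
  vnorm n (vsub (a 0) (b 0)) = 0 ->
  forall t, 0 <= t <= th / eps -> vnorm n (vsub (a t) (b (eps * t))) <= eta.
Proof.
  intros Heta.
  pose proof (exp_pos (K * th)) as HE. set (E := exp (K * th)) in *.
  set (Nmin := (4 * K * th + 4 * th * E * K ^ 2 * th) / eta).
  destruct (exists_nat_gt (Rmax 1 Nmin)) as [N HN].
  pose proof (Rmax_l 1 Nmin). pose proof (Rmax_r 1 Nmin).
  assert (HN0 : (0 < N)%nat) by (apply INR_lt; simpl; lra).
  set (h := th / INR N). assert (Hh : 0 < h) by (unfold h; apply Rdiv_lt_0_compat; lra).
  assert (HNh : INR N * h = th) by (unfold h; field; lra).
  set (e' := eta / (4 * INR N * th * E)).
  assert (0 < 4 * INR N * th * E)
    by (assert (0 < INR N * th) by (apply Rmult_lt_0_compat; lra); nra).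
  assert (He' : 0 < e') by (unfold e'; apply Rdiv_lt_0_compat; lra).
  destruct (uniform_averaging_time N h e' He' Hh HNh) as [T0 [HT0 HT0']].
  (* [eps] is small enough when a cell lasts longer than [T0] in fast time. *)
  exists (h / (T0 + 1)). split; [apply Rdiv_lt_0_compat; lra|].
  intros eps [Heps Hepsd] a Hac Had Hab Ha0 t Ht.
  assert (HH : T0 < h / eps).
  { apply Rmult_lt_reg_r with (eps / (T0 + 1)); [apply Rdiv_lt_0_compat; lra|].
    replace (h / eps * (eps / (T0 + 1))) with (h / (T0 + 1)) by (field; lra).
    assert (0 < eps / (T0 + 1)) by (apply Rdiv_lt_0_compat; lra).
    replace (T0 * (eps / (T0 + 1))) with (eps - eps / (T0 + 1)) by (field; lra). lra. }
  destruct (node_cover N (h / eps) t HN0 ltac:(apply Rdiv_lt_0_compat; lra)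
              ltac:(replace (INR N * (h / eps)) with (th / eps) by (rewrite <- HNh; field; lra); lra))
    as [k [Hk Hkt]].
  assert (INR k + 1 <= INR N) by (rewrite <- S_INR; apply le_INR; lia). pose proof (pos_INR k).
  eapply Rle_trans.
  - apply (cell_interpolation eps a (INR k * h) h t); auto; [nra|rewrite <- HNh; nra|].
    replace ((INR k * h + h) / eps) with ((INR k + 1) * (h / eps)) by (field; lra).
    replace (INR k * h / eps) with (INR k * (h / eps)) by (field; lra). auto.
  - pose proof (grid_error N h e' T0 eps a HN0 Hh HNh ltac:(lra) HT0 Heps HH HT0' Hac Had Hab Ha0
                  k ltac:(lia)) as Hek. fold E in Hek.
    pose proof (avg_budget K th eta E (INR N) HK Hth Heta HE ltac:(lra) ltac:(unfold Nmin in *; lra))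
      as Hbud.
    fold h e' in Hbud. lra.
Qed.

End AveragingCore.

(** Proof by the pigeonhole principle on the
    vectors of the first base-[Q] digits of the fractional parts. *)

Lemma pigeonhole m : forall f : nat -> nat, (forall i, (i <= m)%nat -> (f i < m)%nat) ->
  exists i1 i2, (i1 < i2 <= m)%nat /\ f i1 = f i2.
Proof.
  induction m; intros f Hf; [specialize (Hf 0%nat ltac:(lia)); lia|].
  destruct (classic (exists i, (i <= m)%nat /\ f i = f (S m))) as [[i [Hi Heq]]|Hno].
  - exists i, (S m). split; [lia|auto].
  - (* Collapse the value [f (S m)] away and apply the induction hypothesis. *)
    set (g := fun i => if Nat.ltb (f i) (f (S m)) then f i else (f i - 1)%nat).
    assert (Hne : forall i, (i <= m)%nat -> f i <> f (S m)) by (intros i Hi E; apply Hno; eauto).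
    destruct (IHm g) as [i1 [i2 [Hi Heq]]].
    { intros i Hi. unfold g. pose proof (Hf i ltac:(lia)). pose proof (Hf (S m) ltac:(lia)).
      pose proof (Hne i Hi). destruct (Nat.ltb_spec (f i) (f (S m))); lia. }
    exists i1, i2. split; [lia|]. unfold g in Heq.
    pose proof (Hne i1 ltac:(lia)). pose proof (Hne i2 ltac:(lia)).
    destruct (Nat.ltb_spec (f i1) (f (S m))), (Nat.ltb_spec (f i2) (f (S m))); lia.
Qed.

Fixpoint digits_code (Q n : nat) (d : nat -> nat) : nat :=
  match n with O => O | S k => (digits_code Q k d + d k * Q ^ k)%nat end.

Lemma digits_code_lt Q n d : (0 < Q)%nat -> (forall j, (j < n)%nat -> (d j < Q)%nat) ->
  (digits_code Q n d < Q ^ n)%nat.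
Proof.
  intros HQ H. induction n; simpl; [lia|].
  assert (digits_code Q n d < Q ^ n)%nat by (apply IHn; intros; apply H; lia).
  specialize (H n ltac:(lia)).
  assert (d n * Q ^ n <= (Q - 1) * Q ^ n)%nat by (apply Nat.mul_le_mono_r; lia).
  assert ((Q - 1) * Q ^ n + Q ^ n = Q * Q ^ n)%nat by (destruct Q; [lia|simpl; rewrite Nat.sub_0_r; lia]).
  lia.
Qed.

Lemma digits_code_inj Q n d d' : (0 < Q)%nat ->
  (forall j, (j < n)%nat -> (d j < Q)%nat /\ (d' j < Q)%nat) ->
  digits_code Q n d = digits_code Q n d' -> forall j, (j < n)%nat -> d j = d' j.
Proof.
  intros HQ. induction n; intros H Heq j Hj; [lia|]. simpl in Heq.
  assert (A : (digits_code Q n d < Q ^ n)%nat) by (apply digits_code_lt; auto; intros; apply H; lia).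
  assert (B : (digits_code Q n d' < Q ^ n)%nat) by (apply digits_code_lt; auto; intros; apply H; lia).
  assert (Hn : d n = d' n).
  { destruct (Nat.lt_trichotomy (d n) (d' n)) as [L|[L|L]]; auto.
    - assert ((d n + 1) * Q ^ n <= d' n * Q ^ n)%nat by (apply Nat.mul_le_mono_r; lia). lia.
    - assert ((d' n + 1) * Q ^ n <= d n * Q ^ n)%nat by (apply Nat.mul_le_mono_r; lia). lia. }
  destruct (Nat.eq_dec j n) as [->|]; auto.
  apply IHn; [intros; apply H; lia|rewrite Hn in Heq; lia|lia].
Qed.

Definition frac (x : R) : R := x - IZR (Int_part x).
Definition digit (Q : nat) (x : R) : nat := Z.to_nat (Int_part (INR Q * frac x)).

Lemma frac_bounds x : 0 <= frac x < 1.
Proof. unfold frac. destruct (base_Int_part x). lra. Qed.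

Lemma digit_spec Q x : (1 <= Q)%nat ->
  INR (digit Q x) <= INR Q * frac x < INR (digit Q x) + 1 /\ (digit Q x < Q)%nat.
Proof.
  intros HQ. unfold digit. pose proof (frac_bounds x) as Hf.
  pose proof (le_INR 1 Q HQ) as HQr. simpl in HQr.
  destruct (base_Int_part (INR Q * frac x)) as [B1 B2].
  assert (Z0 : (0 <= Int_part (INR Q * frac x))%Z).
  { assert (-1 < Int_part (INR Q * frac x))%Z by (apply lt_IZR; simpl; nra). lia. }
  rewrite INR_IZR_INZ, Z2Nat.id by auto. split; [lra|].
  apply INR_lt. rewrite INR_IZR_INZ, Z2Nat.id by auto. nra.
Qed.

Lemma dirichlet n (Lam : nat -> R) (Q : nat) (T : R) : (1 <= Q)%nat ->
  exists p : nat, (1 <= p <= Q ^ n)%nat /\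
    forall j, (j < n)%nat -> Cnorm (Csub (Cexpi (Lam j * (INR p * T))) (1, 0)) <= 2 * PI / INR Q.
Proof.
  intros HQ. pose proof (le_INR 1 Q HQ) as HQr. simpl in HQr. pose proof PI_RGT_0.
  set (x := fun j i => Lam j * (INR i * T) / (2 * PI)).
  set (dg := fun j i => digit Q (x j i)).
  destruct (pigeonhole (Q ^ n) (fun i => digits_code Q n (fun j => dg j i))) as [i1 [i2 [Hi Heq]]].
  { intros i Hi. apply digits_code_lt; [lia|]. intros. apply digit_spec; auto. }
  exists (i2 - i1)%nat. split; [lia|]. intros j Hj.
  assert (Hd : dg j i1 = dg j i2).
  { apply (digits_code_inj Q n (fun j => dg j i1) (fun j => dg j i2)); [lia| |apply Heq|auto].
    intros; split; apply digit_spec; auto. }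
  destruct (digit_spec Q (x j i1) HQ) as [[A1 A2] _]. destruct (digit_spec Q (x j i2) HQ) as [[B1 B2] _].
  fold (dg j i1) (dg j i2) in *. rewrite Hd in A1, A2.
  (* Equal digits: the two fractional parts differ by less than [1/Q]. *)
  assert (Hf : Rabs (frac (x j i2) - frac (x j i1)) <= 1 / INR Q).
  { assert (Hq : INR Q * Rabs (frac (x j i2) - frac (x j i1)) <= 1).
    { rewrite <- (Rabs_pos_eq (INR Q)) at 1 by lra. rewrite <- Rabs_mult.
      apply Rabs_le. rewrite Rmult_minus_distr_l. lra. }
    apply Rmult_le_reg_l with (INR Q); [lra|].
    replace (INR Q * (1 / INR Q)) with 1 by (field; lra). lra. }
  rewrite minus_INR by lia.
  replace (Lam j * ((INR i2 - INR i1) * T)) with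
    (2 * PI * IZR (Int_part (x j i2) - Int_part (x j i1)) + 2 * PI * (frac (x j i2) - frac (x j i1)))
    by (unfold frac, x; rewrite minus_IZR; field; lra).
  rewrite Cexpi_period.
  replace (1, 0) with (Cexpi 0) by (unfold Cexpi; rewrite cos_0, sin_0; auto).
  eapply Rle_trans; [apply Cexpi_sub_le|]. rewrite Rminus_0_r, Rabs_mult, Rabs_pos_eq by lra.
  replace (2 * PI / INR Q) with (2 * PI * (1 / INR Q)) by (field; lra).
  apply Rmult_le_compat_l; lra.
Qed.

Definition mean_primitive (n : nat) (Lam : nat -> R) (P : (nat -> Cx) -> nat -> Cx)
    (a w : nat -> Cx) (G : R -> nat -> Cx) : Prop :=
  (forall j, (j < n)%nat -> G 0 j = C0) /\ (forall t, deriv_at n G t (Yf Lam P t a)) /\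
  has_mean n G w.

Lemma resonant_avg_primitive n Lam P a w : is_resonant_avg n Lam P a w ->
  exists G, mean_primitive n Lam P a w G.
Proof.
  intros H.
  set (Pj := fun j (G : R -> Cx) => (j < n)%nat -> G 0 = C0 /\
      (forall t, derivable_pt_lim (fun s => Cre (G s)) t (Cre (Yf Lam P t a j)) /\
                 derivable_pt_lim (fun s => Cim (G s)) t (Cim (Yf Lam P t a j))) /\
      (forall e, 0 < e -> exists T0, forall T, T0 < T -> Cnorm (Csub (Cscale (/ T) (G T)) (w j)) < e)).
  set (Gj := fun j => epsilon (inhabits (fun _ : R => C0)) (Pj j)).
  assert (HG : forall j, (j < n)%nat -> Pj j (Gj j)).
  { intros j Hj. apply epsilon_spec. destruct (H j Hj) as [G HGp]. exists G. intros _. exact HGp. }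
  exists (fun t j => Gj j t). split; [|split].
  - intros j Hj. apply (HG j Hj Hj).
  - intros t j Hj. destruct (HG j Hj Hj) as [_ [Hd _]]. apply Hd.
  - intros e He. pose proof (pos_INR n).
    assert (He' : 0 < e / (INR n + 1)) by (apply Rdiv_lt_0_compat; lra).
    destruct (finite_max (fun j T0 => (j < n)%nat -> forall T, T0 < T ->
                Cnorm (Csub (Cscale (/ T) (Gj j T)) (w j)) < e / (INR n + 1)) n) as [T0 [_ HT0]].
    { intros j d d' Hdd Hp Hj T HT. apply Hp; auto. lra. }
    { intros j Hj. destruct (HG j Hj Hj) as [_ [_ Hm]]. destruct (Hm _ He') as [T0 HT0].
      exists T0. intros _. auto. }
    exists T0. intros T HT. eapply Rle_trans.
    + apply (vnorm_le_comp n _ (e / (INR n + 1))). intros j Hj. left. apply (HT0 j Hj Hj T HT).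
    + apply Rle_trans with ((INR n + 1) * (e / (INR n + 1))); [|right; field; lra].
      apply Rmult_le_compat_r; lra.
Qed.

Lemma mean_le_bound n (G g : R -> nat -> Cx) w M : (forall j, (j < n)%nat -> G 0 j = C0) ->
  (forall t, deriv_at n G t (g t)) -> (forall t, 0 < t -> vnorm n (g t) <= M) ->
  has_mean n G w -> vnorm n w <= M.
Proof.
  intros HG0 Hd Hb Hm. apply Rnot_lt_le. intro Hc.
  set (e := (vnorm n w - M) / 2). assert (He : 0 < e) by (unfold e; lra).
  destruct (Hm e He) as [T0 HT0]. set (T := Rmax T0 0 + 1).
  pose proof (Rmax_l T0 0). pose proof (Rmax_r T0 0).
  specialize (HT0 T ltac:(unfold T; lra)). assert (HTp : 0 < T) by (unfold T; lra).
  assert (HGT : vnorm n (vsub (G T) (G 0)) <= M * (T - 0))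
    by (apply (mvi n G g); [lra|apply (deriv_cont n G g); intros; apply Hd|intros; apply Hd|intros; apply Hb; lra]).
  replace (vnorm n (vsub (G T) (G 0))) with (vnorm n (G T)) in HGT
    by (apply vnorm_ext; intros j Hj; unfold vsub; rewrite HG0 by auto; unfold Csub, C0;
        destruct (G T j); simpl; f_equal; ring).
  assert (vnorm n (vscale (/ T) (G T)) <= M).
  { rewrite vnorm_scale, Rabs_pos_eq by (left; apply Rinv_0_lt_compat; lra).
    apply Rmult_le_reg_l with T; auto. rewrite <- Rmult_assoc, Rinv_r, Rmult_1_l by lra. lra. }
  pose proof (vnorm_tri n w (vscale (/ T) (G T)) vzero) as Htri.
  rewrite !vsub_zero_r, (vnorm_sub_sym n w) in Htri. unfold e in HT0. lra.
Qed.

Lemma has_mean_sub n (G G' : R -> nat -> Cx) w w' :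
  has_mean n G w -> has_mean n G' w' -> has_mean n (fun T => vsub (G T) (G' T)) (vsub w w').
Proof.
  intros H1 H2 e He. destruct (H1 (e / 2)) as [T1 HT1]; [lra|]. destruct (H2 (e / 2)) as [T2 HT2]; [lra|].
  exists (Rmax T1 T2). intros T HT. pose proof (Rmax_l T1 T2). pose proof (Rmax_r T1 T2).
  replace (vsub (vscale (/ T) (vsub (G T) (G' T))) (vsub w w')) with
    (vadd (vsub (vscale (/ T) (G T)) w) (vscale (-1) (vsub (vscale (/ T) (G' T)) w'))) by vring.
  eapply Rle_trans; [apply vnorm_add|]. rewrite vnorm_neg.
  pose proof (HT1 T ltac:(lra)). pose proof (HT2 T ltac:(lra)). lra.
Qed.

(** The field [Y(., b)] is almost periodic, so the mean of its
    primitive towards [-oo] equals the mean towards [+oo]: by Dirichlet there is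
    an almost-period [tau = p T] with [p <= Q^n], and
    [G(-T) ~ G(tau - T) - G(tau) ~ G((p - 1) T) - G(p T) ~ - T w]. *)

(* [G(-T) + T w] is the sum of a shift defect between the increments of [G]
   over [[0, p T]] and [[-T, (p - 1) T]], and of two node errors. *)
Lemma backward_decomposition n (G : R -> nat -> Cx) w T p D e' :
  0 < T -> 1 <= p -> (forall j, (j < n)%nat -> G 0 j = C0) ->
  vnorm n (vsub (vsub (G (0 + p * T)) (G 0)) (vsub (G (- T + p * T)) (G (- T)))) <= D * T ->
  vnorm n (vsub (G (p * T)) (vscale (p * T) w)) <= p * T * e' ->
  vnorm n (vsub (G ((p - 1) * T)) (vscale ((p - 1) * T) w)) <= (p - 1) * T * e' ->
  vnorm n (vsub (vscale (/ T) (G (- T))) (vscale (-1) w)) <= D + p * e' + (p - 1) * e'.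
Proof.
  intros HT Hp HG0 Hshift M1 M0.
  replace (0 + p * T) with (p * T) in Hshift by ring.
  replace (- T + p * T) with ((p - 1) * T) in Hshift by ring.
  set (X := vadd (vadd (vsub (vsub (G (p * T)) (G 0)) (vsub (G ((p - 1) * T)) (G (- T))))
        (vscale (-1) (vsub (G (p * T)) (vscale (p * T) w))))
        (vsub (G ((p - 1) * T)) (vscale ((p - 1) * T) w))).
  assert (HTi : 0 < / T) by (apply Rinv_0_lt_compat; lra).
  assert (HX : vnorm n (vsub (vscale (/ T) (G (- T))) (vscale (-1) w)) = / T * vnorm n X).
  { replace (/ T * vnorm n X) with (vnorm n (vscale (/ T) X))
      by (rewrite vnorm_scale, Rabs_pos_eq; lra).
    apply vnorm_ext. intros j Hj.
    unfold X, vsub, vadd, vscale, Csub, Cadd, Cscale. rewrite (HG0 j Hj). unfold C0.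
    apply injective_projections; simpl; field; lra. }
  assert (HXb : vnorm n X <= D * T + p * T * e' + (p - 1) * T * e')
    by (unfold X; eapply Rle_trans; [apply vnorm_add3|]; rewrite vnorm_neg; lra).
  rewrite HX. apply Rmult_le_reg_l with T; [lra|]. rewrite <- Rmult_assoc, Rinv_r, Rmult_1_l by lra.
  lra.
Qed.

Section BackwardMean.
Variables (n : nat) (Lam : nat -> R) (P : (nat -> Cx) -> nat -> Cx) (K Rad : R).
Hypotheses (HK : 0 < K) (HR : 0 < Rad)
  (HPb : forall x, vnorm n x <= 2 * Rad -> vnorm n (P x) <= K)
  (HPl : forall x y, vnorm n x <= 2 * Rad -> vnorm n y <= 2 * Rad ->
          vnorm n (vsub (P x) (P y)) <= K * vnorm n (vsub x y)).

Lemma primitive_shift (b : nat -> Cx) (G : R -> nat -> Cx) tau d T :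
  vnorm n b <= 2 * Rad -> 0 <= d -> 0 <= T ->
  (forall t, deriv_at n G t (Yf Lam P t b)) ->
  (forall j, (j < n)%nat -> Cnorm (Csub (Cexpi (Lam j * tau)) (1, 0)) <= d) ->
  vnorm n (vsub (vsub (G (0 + tau)) (G 0)) (vsub (G (- T + tau)) (G (- T))))
    <= d * K * (2 * Rad + 1) * T.
Proof.
  intros Hb Hd HT HGd Hj.
  set (Ginc := fun s => vsub (G (s + tau)) (G s)).
  set (g := fun s => vsub (Yf Lam P (s + tau) b) (Yf Lam P s b)).
  assert (Hder : forall s, deriv_at n Ginc s (g s))
    by (intros s; apply deriv_vsub; [apply deriv_shift|]; apply HGd).
  pose proof (mvi n Ginc g (d * K * (2 * Rad + 1)) (- T) 0 ltac:(lra)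
                (deriv_cont n Ginc g _ _ (fun s _ => Hder s)) (fun s _ => Hder s)
                (fun s _ => Y_shift n Lam P K Rad HPb HPl s tau b d Hb Hd Hj)) as Hmv.
  replace (0 - - T) with T in Hmv by ring. exact Hmv.
Qed.

Lemma backward_mean (b : nat -> Cx) (G : R -> nat -> Cx) (w : nat -> Cx) :
  vnorm n b <= 2 * Rad -> mean_primitive n Lam P b w G ->
  has_mean n (fun T => G (- T)) (vscale (-1) w).
Proof.
  intros Hb [HG0 [HGd HGm]] e He.
  set (c1 := K * (2 * Rad + 1)). assert (Hc1 : 0 < c1) by (unfold c1; nra).
  destruct (exists_nat_gt (Rmax 1 (4 * PI * c1 / e))) as [Q HQ].
  pose proof (Rmax_l 1 (4 * PI * c1 / e)). pose proof (Rmax_r 1 (4 * PI * c1 / e)). pose proof PI_RGT_0.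
  assert (HQn : (1 <= Q)%nat) by (apply INR_le; simpl; lra).
  (* Dirichlet scale [Q]: the shift defect [2 pi c1 / Q] is at most [e / 2]. *)
  assert (HQd : 2 * PI / INR Q * c1 <= e / 2).
  { apply Rmult_le_reg_r with (2 * INR Q / e); [apply Rdiv_lt_0_compat; lra|].
    replace (2 * PI / INR Q * c1 * (2 * INR Q / e)) with (4 * PI * c1 / e) by (field; lra).
    replace (e / 2 * (2 * INR Q / e)) with (INR Q) by (field; lra). lra. }
  set (m := (Q ^ n)%nat).
  assert (Hm : 1 <= INR m)
    by (apply (le_INR 1); unfold m; pose proof (Nat.pow_le_mono_l 1 Q n HQn); rewrite Nat.pow_1_l in *; auto).
  set (e' := e / (4 * INR m)). assert (He' : 0 < e') by (unfold e'; apply Rdiv_lt_0_compat; lra).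
  destruct (HGm e' He') as [T0 HT0].
  exists (Rmax T0 0). intros T HT. pose proof (Rmax_l T0 0). pose proof (Rmax_r T0 0).
  destruct (dirichlet n Lam Q T HQn) as [p [Hp Hpj]].
  assert (Hp1 : 1 <= INR p) by (apply (le_INR 1); lia).
  assert (Hpm : INR p <= INR m) by (apply le_INR; unfold m; lia).
  pose proof (primitive_shift b G (INR p * T) (2 * PI / INR Q) T Hb
                ltac:(left; apply Rdiv_lt_0_compat; lra) ltac:(lra) HGd Hpj) as Hshift.
  assert (Hnode : forall q : nat, vnorm n (vsub (G (INR q * T)) (vscale (INR q * T) w)) <= INR q * T * e').
  { intros q. apply (mean_node_bound n G w e' (Rmax T0 0)); auto; [lra| |].
    - intros T' HT'. apply HT0. lra.
    - destruct q; [left; simpl; ring|right]. rewrite S_INR. pose proof (pos_INR q). nra. }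
  pose proof (Hnode (p - 1)%nat) as M0. rewrite minus_INR in M0 by lia. change (INR 1) with 1 in M0.
  eapply Rle_trans; [apply (backward_decomposition n G w T (INR p)); eauto; lra|].
  assert (INR p * e' + (INR p - 1) * e' <= e / 2).
  { apply Rle_trans with (2 * INR m * e'); [nra|]. unfold e'. right. field. lra. }
  unfold c1 in HQd. nra.
Qed.

End BackwardMean.

(** In the interaction representation we solve
    [a' = eps Y(t, a)] with [P] replaced by [P o retraction onto the ball of
    radius 2 Rad], which is globally bounded and Lipschitz; Picard iterates
    converge locally uniformly (in the weighted norm [e^{-4 eps K |t|}]) to a
    global solution, which never leaves the ball, so the truncation is
    invisible. *)

Lemma pow_half_small e : 0 < e -> exists N, forall k, (N <= k)%nat -> (/ 2) ^ k < e.
Proof.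
  intros He. destruct (pow_lt_1_zero (/ 2) ltac:(rewrite Rabs_pos_eq; lra) e He) as [N HN].
  exists N. intros k Hk. specialize (HN k Hk). rewrite Rabs_pos_eq in HN; auto. apply pow_le; lra.
Qed.

Lemma geometric_zero x A : 0 <= A -> (forall k, x <= A * (/ 2) ^ k) -> x <= 0.
Proof.
  intros HA Hk. apply Rnot_lt_le. intro Hx.
  destruct (pow_half_small (x / (A + 1))) as [k Hk']; [apply Rdiv_lt_0_compat; lra|].
  specialize (Hk' k (le_n _)). specialize (Hk k). pose proof (pow_lt (/ 2) k ltac:(lra)).
  assert ((A + 1) * (/ 2) ^ k < x); [|nra].
  apply Rmult_lt_reg_l with (/ (A + 1)); [apply Rinv_0_lt_compat; lra|].
  replace (/ (A + 1) * ((A + 1) * (/ 2) ^ k)) with ((/ 2) ^ k) by (field; lra).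
  replace (/ (A + 1) * x) with (x / (A + 1)) by (field; lra). auto.
Qed.

Lemma geometric_cauchy (f : nat -> R) D : 0 <= D ->
  (forall k m, (k <= m)%nat -> Rabs (f m - f k) <= D * (/ 2) ^ k) -> ex_finite_lim_seq f.
Proof.
  intros HD H. apply ex_lim_seq_cauchy_corr. intros e.
  assert (Hpos : 0 < e / (2 * D + 1)) by (apply Rdiv_lt_0_compat; [apply cond_pos|lra]).
  destruct (pow_half_small _ Hpos) as [N HN]. exists N. intros n1 n2 H1 H2.
  pose proof (H N n1 H1). pose proof (H N n2 H2). specialize (HN N (le_n _)).
  pose proof (Rabs_triang (f n1 - f N) (f N - f n2)) as Htri.
  replace (f n1 - f N + (f N - f n2)) with (f n1 - f n2) in Htri by ring.
  rewrite (Rabs_minus_sym (f N)) in Htri. pose proof (pow_lt (/ 2) N ltac:(lra)).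
  assert (2 * D * (/ 2) ^ N < e); [|lra].
  apply Rle_lt_trans with ((2 * D + 1) * (/ 2) ^ N); [nra|].
  apply Rmult_lt_reg_r with (/ (2 * D + 1)); [apply Rinv_0_lt_compat; lra|].
  replace ((2 * D + 1) * (/ 2) ^ N * / (2 * D + 1)) with ((/ 2) ^ N) by (field; lra).
  unfold Rdiv in HN. auto.
Qed.

Lemma lim_seq_near (x : nat -> R) y Bd k : ex_finite_lim_seq x ->
  (forall m, (k <= m)%nat -> Rabs (x m - y) <= Bd) -> Rabs (real (Lim_seq x) - y) <= Bd.
Proof.
  intros Hx Hb. pose proof (Lim_seq_correct' x Hx) as Hl.
  apply is_lim_seq_spec in Hl. set (L := real (Lim_seq x)) in *.
  apply Rnot_lt_le. intro Hc.
  destruct (Hl (mkposreal _ (proj2 (Rlt_0_minus _ _) Hc))) as [N HN]. simpl in HN.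
  specialize (HN (Nat.max N k) (Nat.le_max_l _ _)). specialize (Hb (Nat.max N k) (Nat.le_max_r _ _)).
  pose proof (Rabs_triang (L - x (Nat.max N k)) (x (Nat.max N k) - y)) as Htri.
  replace (L - x (Nat.max N k) + (x (Nat.max N k) - y)) with (L - y) in Htri by ring.
  rewrite Rabs_minus_sym in HN. lra.
Qed.

Lemma vnorm_eq0_comp n v j : vnorm n v = 0 -> (j < n)%nat -> v j = C0.
Proof.
  intros H Hj. pose proof (Cnorm_le_vnorm n v j Hj). pose proof (Cnorm_nonneg (v j)).
  assert (Hz : Cnorm (v j) = 0) by lra. unfold Cnorm in Hz. apply sqrt_eq_0 in Hz; [|nra].
  unfold C0. destruct (v j) as [x y]; simpl in *. f_equal; nra.
Qed.

Lemma rcont_exp A c a b : rcont (fun s => A * exp (c * s)) a b.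
Proof.
  apply rcont_of_cont. intros t. apply derivable_continuous_pt.
  exists (A * (c * exp (c * t))). apply is_derive_Reals. auto_derive; auto. ring.
Qed.

Lemma deriv_exp A c t : derivable_pt_lim (fun s => A * exp (c * s)) t (A * (c * exp (c * t))).
Proof. apply is_derive_Reals. auto_derive; auto. ring. Qed.

Lemma exp_weight_bound n (w d : R -> nat -> Cx) c A t : 0 < c -> 0 <= A ->
  vnorm n (w 0) = 0 -> (forall s, deriv_at n w s (d s)) ->
  (forall s, vnorm n (d s) <= c * A * exp (2 * c * Rabs s)) ->
  vnorm n (w t) <= A / 2 * exp (2 * c * Rabs t).
Proof.
  intros Hc HA Hw0 Hd Hb.
  assert (Hwc : forall a b, cont_on n w a b) by (intros; apply (deriv_cont n w d); auto).
  pose proof (vnorm_tri n (w t) (w 0) vzero) as Htri. rewrite !vsub_zero_r, Hw0 in Htri.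
  destruct (Rle_dec 0 t).
  - rewrite Rabs_pos_eq by auto.
    pose proof (mvi_gen n w d (fun s => A / 2 * exp (2 * c * s)) (fun s => A / 2 * (2 * c * exp (2 * c * s)))
                  0 t r (Hwc 0 t) (rcont_exp _ _ 0 t) (fun s _ => Hd s) (fun s _ => deriv_exp _ _ s)) as H.
    assert (0 <= A / 2 * exp (2 * c * 0)) by (pose proof (exp_pos (2 * c * 0)); nra).
    enough (vnorm n (vsub (w t) (w 0)) <= A / 2 * exp (2 * c * t) - A / 2 * exp (2 * c * 0)) by lra.
    apply H. intros s Hs. eapply Rle_trans; [apply Hb|]. rewrite Rabs_pos_eq by lra. right. field.
  - rewrite Rabs_left by lra. rewrite vnorm_sub_sym in Htri.
    pose proof (mvi_gen n w d (fun s => - (A / 2) * exp (-2 * c * s))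
                  (fun s => - (A / 2) * (-2 * c * exp (-2 * c * s))) t 0 ltac:(lra) (Hwc t 0)
                  (rcont_exp _ _ t 0) (fun s _ => Hd s) (fun s _ => deriv_exp _ _ s)) as H.
    assert (0 <= A / 2 * exp (-2 * c * 0)) by (pose proof (exp_pos (-2 * c * 0)); nra).
    enough (vnorm n (vsub (w 0) (w t)) <= - (A / 2) * exp (-2 * c * 0) - - (A / 2) * exp (-2 * c * t))
      by (replace (2 * c * - t) with (-2 * c * t) by ring; lra).
    apply H. intros s Hs. eapply Rle_trans; [apply Hb|]. rewrite Rabs_left by lra.
    replace (2 * c * - s) with (-2 * c * s) by ring. right. field.
Qed.

Section Retraction.
Variables (n : nat) (Rad : R).
Hypothesis HR : 0 < Rad.

Definition retract (x : nat -> Cx) : nat -> Cx :=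
  if Rle_dec (vnorm n x) (2 * Rad) then x else vscale (2 * Rad / vnorm n x) x.

Lemma retract_in x : vnorm n x <= 2 * Rad -> retract x = x.
Proof. intros. unfold retract. destruct Rle_dec; auto. lra. Qed.

Lemma retract_bound x : vnorm n (retract x) <= 2 * Rad.
Proof.
  unfold retract. destruct Rle_dec; auto. rewrite vnorm_scale, Rabs_pos_eq.
  - unfold Rdiv. rewrite Rmult_assoc, Rinv_l; lra.
  - apply Rlt_le, Rdiv_lt_0_compat; lra.
Qed.

Lemma retract_out_dist x y : 2 * Rad < vnorm n x ->
  vnorm n (vsub (vscale (2 * Rad / vnorm n x) x) y) <= (vnorm n x - 2 * Rad) + vnorm n (vsub x y).
Proof.
  intros Hx. replace (vsub (vscale (2 * Rad / vnorm n x) x) y) with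
    (vadd (vscale (2 * Rad / vnorm n x - 1) x) (vsub x y)) by vring.
  eapply Rle_trans; [apply vnorm_add|]. rewrite vnorm_scale.
  assert (2 * Rad / vnorm n x <= 1).
  { apply Rmult_le_reg_r with (vnorm n x); [lra|]. unfold Rdiv. rewrite Rmult_assoc, Rinv_l; lra. }
  rewrite Rabs_left1 by lra.
  replace (- (2 * Rad / vnorm n x - 1) * vnorm n x) with (vnorm n x - 2 * Rad) by (field; lra). lra.
Qed.

Lemma retract_lip x y : vnorm n (vsub (retract x) (retract y)) <= 2 * vnorm n (vsub x y).
Proof.
  pose proof (vnorm_rev_tri n x y) as Hrev. apply Rabs_le_between in Hrev.
  pose proof (vnorm_nonneg n (vsub x y)).
  unfold retract. destruct (Rle_dec (vnorm n x) (2 * Rad)), (Rle_dec (vnorm n y) (2 * Rad)).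
  - lra.
  - rewrite vnorm_sub_sym. eapply Rle_trans; [apply retract_out_dist; lra|].
    rewrite vnorm_sub_sym. lra.
  - eapply Rle_trans; [apply retract_out_dist; lra|lra].
  - set (cx := 2 * Rad / vnorm n x). set (cy := 2 * Rad / vnorm n y).
    replace (vsub (vscale cx x) (vscale cy y)) with (vadd (vscale cx (vsub x y)) (vscale (cx - cy) y))
      by vring.
    eapply Rle_trans; [apply vnorm_add|]. rewrite !vnorm_scale.
    assert (Hcx : 0 <= cx <= 1).
    { unfold cx. split; [apply Rlt_le, Rdiv_lt_0_compat; lra|].
      apply Rmult_le_reg_r with (vnorm n x); [lra|]. unfold Rdiv. rewrite Rmult_assoc, Rinv_l; lra. }
    assert (Hc : Rabs (cx - cy) * vnorm n y <= vnorm n (vsub x y)).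
    { rewrite <- (Rabs_pos_eq (vnorm n y)) by apply vnorm_nonneg. rewrite <- Rabs_mult.
      replace ((cx - cy) * vnorm n y) with (cx * (vnorm n y - vnorm n x)) by (unfold cx, cy; field; lra).
      rewrite Rabs_mult, (Rabs_pos_eq cx), Rabs_minus_sym by lra.
      pose proof (vnorm_rev_tri n x y). pose proof (Rabs_pos (vnorm n x - vnorm n y)). nra. }
    rewrite Rabs_pos_eq by lra. nra.
Qed.

End Retraction.

Section Picard.
Variables (n : nat) (Lam : nat -> R) (P : (nat -> Cx) -> nat -> Cx) (K Rad eps : R) (v0 : nat -> Cx).
Hypotheses (HK : 0 < K) (HR : 0 < Rad) (Heps : 0 < eps)
  (HPb : forall x, vnorm n x <= 2 * Rad -> vnorm n (P x) <= K)
  (HPl : forall x y, vnorm n x <= 2 * Rad -> vnorm n y <= 2 * Rad ->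
          vnorm n (vsub (P x) (P y)) <= K * vnorm n (vsub x y)).

Definition Ztr (t : R) (x : nat -> Cx) : nat -> Cx := Yf Lam (fun y => P (retract n Rad y)) t x.

Lemma Ztr_bound t x : vnorm n (Ztr t x) <= K.
Proof. unfold Ztr, Yf. rewrite vnorm_Phi. apply HPb, retract_bound; auto. Qed.

Lemma Ztr_lip t x y : vnorm n (vsub (Ztr t x) (Ztr t y)) <= 2 * K * vnorm n (vsub x y).
Proof.
  unfold Ztr, Yf. rewrite Phi_sub, vnorm_Phi.
  eapply Rle_trans; [apply HPl; apply retract_bound; auto|].
  pose proof (retract_lip n Rad HR (PhiL Lam (- t) x) (PhiL Lam (- t) y)).
  rewrite Phi_sub, vnorm_Phi in *. nra.
Qed.

Lemma Ztr_time s t x :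
  vnorm n (vsub (Ztr s x) (Ztr t x)) <= Lsum n Lam * Rabs (s - t) * (K + 2 * K * vnorm n x).
Proof.
  unfold Ztr, Yf. set (Pt := fun y => P (retract n Rad y)).
  eapply Rle_trans; [apply (vnorm_tri n _ (PhiL Lam t (Pt (PhiL Lam (- s) x))))|].
  rewrite (Phi_sub Lam t), vnorm_Phi.
  pose proof (Phi_time_lip n Lam s t (Pt (PhiL Lam (- s) x))).
  pose proof (HPb _ (retract_bound n Rad HR (PhiL Lam (- s) x))).
  pose proof (HPl _ _ (retract_bound n Rad HR (PhiL Lam (- s) x)) (retract_bound n Rad HR (PhiL Lam (- t) x))).
  pose proof (retract_lip n Rad HR (PhiL Lam (- s) x) (PhiL Lam (- t) x)).
  pose proof (Phi_time_lip n Lam (- s) (- t) x) as Hst.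
  replace (- s - - t) with (- (s - t)) in Hst by ring. rewrite Rabs_Ropp in Hst.
  pose proof (Lsum_nonneg n Lam). pose proof (Rabs_pos (s - t)).
  assert (0 <= Lsum n Lam * Rabs (s - t)) by nra.
  assert (Lsum n Lam * Rabs (s - t) * vnorm n (Pt (PhiL Lam (- s) x)) <= Lsum n Lam * Rabs (s - t) * K)
    by (apply Rmult_le_compat_l; auto).
  unfold Pt in *. nra.
Qed.

Lemma Ztr_comp_cont u : gcont n u -> forall t j, (j < n)%nat ->
  continuity_pt (fun s => fst (Ztr s (u s) j)) t /\ continuity_pt (fun s => snd (Ztr s (u s) j)) t.
Proof.
  intros Hu t j Hj. apply (coords_cont n (fun s => Ztr s (u s)) t j); auto. intros e He.
  pose proof (Lsum_nonneg n Lam). pose proof (vnorm_nonneg n (u t)).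
  set (L := Lsum n Lam * (K + 2 * K * vnorm n (u t)) + 1).
  assert (0 <= Lsum n Lam * (K + 2 * K * vnorm n (u t))) by (apply Rmult_le_pos; nra).
  assert (HL : 0 < L) by (unfold L; lra).
  destruct (Hu t (e / (4 * K))) as [d1 [Hd1 Hu1]]; [apply Rdiv_lt_0_compat; lra|].
  exists (Rmin d1 (e / (2 * L))). split; [apply Rmin_pos; auto; apply Rdiv_lt_0_compat; lra|].
  intros s Hst. pose proof (Rmin_l d1 (e / (2 * L))). pose proof (Rmin_r d1 (e / (2 * L))).
  eapply Rle_lt_trans; [apply (vnorm_tri n _ (Ztr s (u t)))|].
  pose proof (Ztr_lip s (u s) (u t)). pose proof (Ztr_time s t (u t)).
  specialize (Hu1 s ltac:(lra)). pose proof (Rabs_pos (s - t)).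
  assert (2 * K * vnorm n (vsub (u s) (u t)) < e / 2).
  { apply Rlt_le_trans with (2 * K * (e / (4 * K))); [apply Rmult_lt_compat_l; lra|right; field; lra]. }
  assert (L * Rabs (s - t) < e / 2).
  { apply Rlt_le_trans with (L * (e / (2 * L))); [apply Rmult_lt_compat_l; lra|right; field; lra]. }
  assert (Lsum n Lam * Rabs (s - t) * (K + 2 * K * vnorm n (u t)) <= L * Rabs (s - t))
    by (unfold L; nra).
  lra.
Qed.

Definition picard_map (u : R -> nat -> Cx) (t : R) : nat -> Cx :=
  fun j => (fst (v0 j) + eps * RInt (fun s => fst (Ztr s (u s) j)) 0 t,
            snd (v0 j) + eps * RInt (fun s => snd (Ztr s (u s) j)) 0 t).

Lemma picard_map_deriv u : gcont n u -> forall t, deriv_at n (picard_map u) t (vscale eps (Ztr t (u t))).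
Proof.
  intros Hu t j Hj. unfold picard_map, vscale, Cscale, Cre, Cim; cbn [fst snd].
  assert (Hprim : forall (f : R -> R) c0, (forall s, continuity_pt f s) ->
            derivable_pt_lim (fun x => c0 + eps * RInt f 0 x) t (eps * f t)).
  { intros f c0 Hf. rewrite <- (Rplus_0_l (eps * f t)).
    apply (derivable_pt_lim_plus (fct_cte c0) (fun x => eps * RInt f 0 x));
      [apply derivable_pt_lim_const|apply (derivable_pt_lim_scal (fun x => RInt f 0 x)), ftc; auto]. }
  split; apply Hprim; intros s; apply (Ztr_comp_cont u Hu s j Hj).
Qed.

Lemma picard_map_0 u : picard_map u 0 = v0.
Proof.
  apply functional_extensionality; intro j. unfold picard_map. rewrite !RInt_point.
  apply injective_projections; simpl; unfold zero; simpl; ring.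
Qed.

Fixpoint picard (k : nat) : R -> nat -> Cx :=
  match k with O => fun _ => v0 | S k' => picard_map (picard k') end.

Lemma picard_gcont k : gcont n (picard k).
Proof.
  induction k.
  - intros t e He. exists 1. split; [lra|]. intros s _. simpl. rewrite vnorm_sub_self. lra.
  - apply (deriv_gcont n _ (fun t => vscale eps (Ztr t (picard k t)))). apply picard_map_deriv. auto.
Qed.

Lemma picard_deriv k t : deriv_at n (picard (S k)) t (vscale eps (Ztr t (picard k t))).
Proof. apply picard_map_deriv, picard_gcont. Qed.

Lemma slow_speed_lip t x y :
  vnorm n (vsub (vscale eps (Ztr t x)) (vscale eps (Ztr t y))) <= 2 * eps * K * vnorm n (vsub x y).
Proof.
  replace (vsub (vscale eps (Ztr t x)) (vscale eps (Ztr t y))) with (vscale eps (vsub (Ztr t x) (Ztr t y)))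
    by vring.
  rewrite vnorm_scale, Rabs_pos_eq by lra. pose proof (Ztr_lip t x y). nra.
Qed.

Let c := 2 * eps * K.
Let Eb t := exp (2 * c * Rabs t).

Lemma c_pos : 0 < c.
Proof. unfold c. nra. Qed.

Lemma Eb_mono s t : Rabs s <= Rabs t -> Eb s <= Eb t.
Proof.
  intros. unfold Eb. destruct (Req_dec (Rabs s) (Rabs t)) as [->|]; [lra|].
  left. apply exp_increasing. pose proof c_pos. nra.
Qed.

Lemma picard_step k t : vnorm n (vsub (picard (S k) t) (picard k t)) <= / 4 * (/ 2) ^ k * Eb t.
Proof.
  pose proof c_pos as Hc. induction k as [|k IH] in t |- *.
  - assert (Hb : vnorm n (vsub (picard 1 t) (picard 1 0)) <= eps * K * Rabs t).
    { apply (mvi_sym n (picard 1) (fun s => vscale eps (Ztr s (picard 0 s)))).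
      - intros; apply gcont_cont_on, picard_gcont.
      - intros; apply picard_deriv.
      - intros s _. rewrite vnorm_scale, Rabs_pos_eq by lra.
        apply Rmult_le_compat_l; [lra|apply Ztr_bound]. }
    simpl picard in Hb |- * at 2. rewrite picard_map_0 in Hb.
    unfold Eb. pose proof (exp_ineq1_le (2 * c * Rabs t)). pose proof (Rabs_pos t).
    simpl. unfold c in *. nra.
  - eapply Rle_trans; [apply (exp_weight_bound n (fun s => vsub (picard (S (S k)) s) (picard (S k) s))
             (fun s => vsub (vscale eps (Ztr s (picard (S k) s))) (vscale eps (Ztr s (picard k s))))
             c (/ 4 * (/ 2) ^ k) t Hc)|].
    + pose proof (pow_le (/ 2) k ltac:(lra)). lra.
    + simpl picard. rewrite !picard_map_0. apply vnorm_sub_self.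
    + intros s. apply deriv_vsub; apply picard_deriv.
    + intros s. eapply Rle_trans; [apply slow_speed_lip|].
      fold c. rewrite (Rmult_assoc c). apply Rmult_le_compat_l; [lra|apply IH].
    + unfold Eb. simpl. right. field.
Qed.

Lemma picard_cauchy k m t : (k <= m)%nat ->
  vnorm n (vsub (picard m t) (picard k t)) <= / 2 * Eb t * (/ 2) ^ k.
Proof.
  intros Hkm. replace m with (k + (m - k))%nat by lia. generalize (m - k)%nat as d. intros d.
  assert (Hsum : vnorm n (vsub (picard (k + d) t) (picard k t))
                   <= / 2 * Eb t * ((/ 2) ^ k - (/ 2) ^ (k + d))).
  { induction d.
    - rewrite Nat.add_0_r, vnorm_sub_self. lra.
    - rewrite Nat.add_succ_r. eapply Rle_trans; [apply (vnorm_tri n _ (picard (k + d) t))|].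
      pose proof (picard_step (k + d) t). simpl pow at 2. lra. }
  pose proof (pow_lt (/ 2) (k + d) ltac:(lra)). pose proof (exp_pos (2 * c * Rabs t)).
  unfold Eb in *. nra.
Qed.

Definition picard_limit (t : R) : nat -> Cx := fun j =>
  (real (Lim_seq (fun m => fst (picard m t j))), real (Lim_seq (fun m => snd (picard m t j)))).

Lemma picard_limit_close k t :
  vnorm n (vsub (picard_limit t) (picard k t)) <= 2 * INR n * (/ 2 * Eb t * (/ 2) ^ k).
Proof.
  apply vnorm_le_coords. intros j Hj. unfold picard_limit, vsub, Csub; simpl.
  assert (HD : 0 <= / 2 * Eb t) by (unfold Eb; pose proof (exp_pos (2 * c * Rabs t)); lra).
  assert (Hcoord : forall k' m, (k' <= m)%nat ->
            Rabs (fst (picard m t j) - fst (picard k' t j)) <= / 2 * Eb t * (/ 2) ^ k' /\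
            Rabs (snd (picard m t j) - snd (picard k' t j)) <= / 2 * Eb t * (/ 2) ^ k').
  { intros k' m Hkm. pose proof (picard_cauchy k' m t Hkm) as Hc.
    pose proof (Cnorm_le_vnorm n (vsub (picard m t) (picard k' t)) j Hj).
    pose proof (fst_le_Cnorm (vsub (picard m t) (picard k' t) j)).
    pose proof (snd_le_Cnorm (vsub (picard m t) (picard k' t) j)).
    unfold vsub, Csub in *; simpl in *. lra. }
  split; apply (lim_seq_near _ _ _ k); try (intros; apply Hcoord; auto);
    apply (geometric_cauchy _ (/ 2 * Eb t) HD); intros; apply Hcoord; auto.
Qed.

(* The limit is continuous, as a locally uniform limit of continuous curves. *)
Lemma picard_limit_gcont : gcont n picard_limit.
Proof.
  intros t e He.
  set (E1 := Eb (Rabs t + 1)).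
  assert (HE1 : forall s, Rabs (s - t) < 1 -> Eb s <= E1).
  { intros s Hs. apply Eb_mono. rewrite (Rabs_pos_eq (Rabs t + 1)) by (pose proof (Rabs_pos t); lra).
    pose proof (Rabs_triang (s - t) t). replace (s - t + t) with s in * by ring. lra. }
  set (C := 2 * INR n * (/ 2 * E1) + 1).
  assert (HC : 0 < C) by (unfold C, E1, Eb; pose proof (pos_INR n); pose proof (exp_pos (2 * c * Rabs (Rabs t + 1))); nra).
  destruct (pow_half_small (e / (3 * C))) as [k Hk]; [apply Rdiv_lt_0_compat; lra|].
  specialize (Hk k (le_n _)).
  assert (Hunif : forall r, Rabs (r - t) < 1 -> 2 * INR n * (/ 2 * Eb r * (/ 2) ^ k) < e / 3).
  { intros r Hr. pose proof (HE1 r Hr). pose proof (pos_INR n). pose proof (pow_lt (/ 2) k ltac:(lra)).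
    apply Rle_lt_trans with (C * (/ 2) ^ k).
    - unfold C. assert (0 <= INR n * ((E1 - Eb r) * (/ 2) ^ k)) by (apply Rmult_le_pos; nra). nra.
    - apply Rmult_lt_reg_l with (/ C); [apply Rinv_0_lt_compat; lra|].
      replace (/ C * (C * (/ 2) ^ k)) with ((/ 2) ^ k) by (field; lra).
      replace (/ C * (e / 3)) with (e / (3 * C)) by (field; lra). auto. }
  destruct (picard_gcont k t (e / 3)) as [d1 [Hd1 H1]]; [lra|].
  exists (Rmin 1 d1). split; [apply Rmin_pos; lra|]. intros s Hs.
  pose proof (Rmin_l 1 d1). pose proof (Rmin_r 1 d1).
  eapply Rle_lt_trans; [apply (vnorm_tri n _ (picard k s))|].
  eapply Rle_lt_trans; [apply Rplus_le_compat_l, (vnorm_tri n _ (picard k t))|].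
  pose proof (picard_limit_close k s). pose proof (picard_limit_close k t) as Ht.
  rewrite vnorm_sub_sym in Ht. specialize (H1 s ltac:(lra)).
  pose proof (Hunif s ltac:(lra)). pose proof (Hunif t ltac:(rewrite Rminus_diag, Rabs_R0; lra)). lra.
Qed.

(* The limit is a fixed point of the Picard map: it is within
   [A 2^-k] of [picard_map picard_limit t] for every [k]. *)
Lemma picard_limit_fixed t j : (j < n)%nat -> picard_limit t j = picard_map picard_limit t j.
Proof.
  intros Hj.
  set (D := 2 * INR n * (/ 2 * Eb t)). pose proof c_pos.
  assert (HD : 0 <= D) by (unfold D, Eb; pose proof (pos_INR n); pose proof (exp_pos (2 * c * Rabs t)); nra).
  assert (Hk : forall k, vnorm n (vsub (picard_limit t) (picard_map picard_limit t))
                         <= (D / 2 + c * D * Rabs t) * (/ 2) ^ k).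
  { intros k. eapply Rle_trans; [apply (vnorm_tri n _ (picard (S k) t))|].
    pose proof (picard_limit_close (S k) t) as E1. simpl pow in E1.
    assert (E2 : vnorm n (vsub (picard (S k) t) (picard_map picard_limit t)) <= c * D * (/ 2) ^ k * Rabs t).
    { rewrite <- (vsub_zero_r (vsub (picard (S k) t) _)).
      replace vzero with (vsub (picard (S k) 0) (picard_map picard_limit 0))
        by (simpl picard; rewrite !picard_map_0; apply vsub_self).
      apply (mvi_sym n (fun s => vsub (picard (S k) s) (picard_map picard_limit s))
               (fun s => vsub (vscale eps (Ztr s (picard k s))) (vscale eps (Ztr s (picard_limit s))))).
      - intros a b. apply (deriv_cont n _ (fun s => vsub (vscale eps (Ztr s (picard k s)))
                                                      (vscale eps (Ztr s (picard_limit s))))).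
        intros; apply deriv_vsub; [apply picard_deriv|apply picard_map_deriv, picard_limit_gcont].
      - intros; apply deriv_vsub; [apply picard_deriv|apply picard_map_deriv, picard_limit_gcont].
      - intros s Hs. eapply Rle_trans; [apply slow_speed_lip|]. fold c. rewrite vnorm_sub_sym.
        rewrite !Rmult_assoc. apply Rmult_le_compat_l; [lra|].
        eapply Rle_trans; [apply picard_limit_close|]. pose proof (Eb_mono s t Hs).
        pose proof (pos_INR n). pose proof (pow_lt (/ 2) k ltac:(lra)). unfold D.
        assert (0 <= INR n * ((Eb t - Eb s) * (/ 2) ^ k)) by (apply Rmult_le_pos; nra). nra. }
    replace (2 * INR n * (/ 2 * Eb t * (/ 2 * (/ 2) ^ k))) with (D / 2 * (/ 2) ^ k) in E1
      by (unfold D; field).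
    replace ((D / 2 + c * D * Rabs t) * (/ 2) ^ k) with (D / 2 * (/ 2) ^ k + c * D * (/ 2) ^ k * Rabs t)
      by ring.
    lra. }
  assert (Hz : vnorm n (vsub (picard_limit t) (picard_map picard_limit t)) = 0).
  { apply Rle_antisym; [|apply vnorm_nonneg].
    apply (geometric_zero _ (D / 2 + c * D * Rabs t)); auto.
    pose proof (Rabs_pos t). assert (0 <= c * D) by nra. nra. }
  pose proof (vnorm_eq0_comp n _ j Hz Hj) as Hc. unfold vsub, Csub, C0 in Hc.
  destruct (picard_limit t j), (picard_map picard_limit t j). simpl in Hc.
  injection Hc. intros. f_equal; lra.
Qed.

Lemma picard_limit_deriv t : deriv_at n picard_limit t (vscale eps (Ztr t (picard_limit t))).
Proof.
  apply (deriv_at_ext n picard_limit (picard_map picard_limit)); [intros; apply picard_limit_fixed; auto|].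
  apply picard_map_deriv, picard_limit_gcont.
Qed.

Lemma picard_limit_0 j : (j < n)%nat -> picard_limit 0 j = v0 j.
Proof. intros. rewrite picard_limit_fixed, picard_map_0 by auto. auto. Qed.

End Picard.

(* Existence for the fast equation on [[-T, T]]: the truncated slow solution
   moves at speed [<= eps K], hence stays within [Rad] of [v0] and never feels
   the truncation; rotating back gives a solution. *)
Lemma exists_solution n Lam P K Rad eps v0 T : 0 < K -> 0 < Rad -> 0 < eps ->
  (forall x, vnorm n x <= 2 * Rad -> vnorm n (P x) <= K) ->
  (forall x y, vnorm n x <= 2 * Rad -> vnorm n y <= 2 * Rad ->
     vnorm n (vsub (P x) (P y)) <= K * vnorm n (vsub x y)) ->
  vnorm n v0 <= Rad -> eps * K * T <= Rad ->
  exists v, solves_eps n Lam P eps v0 T v.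
Proof.
  intros HK HR Heps HPb HPl Hv0 HT.
  set (u := picard_limit n Lam P Rad eps v0).
  pose proof (picard_limit_deriv n Lam P K Rad eps v0 HK HR Heps HPb HPl) as Hud.
  pose proof (picard_limit_0 n Lam P K Rad eps v0 HK HR Heps HPb HPl) as Hu0.
  pose proof (picard_limit_gcont n Lam P K Rad eps v0 HK HR Heps HPb HPl) as Hug. fold u in Hud, Hu0, Hug.
  assert (Hub : forall t, - T < t < T -> vnorm n (u t) <= 2 * Rad).
  { intros t Ht.
    assert (Hd : vnorm n (vsub (u t) (u 0)) <= eps * K * Rabs t).
    { apply (mvi_sym n u (fun s => vscale eps (Ztr n Lam P Rad s (u s)))); auto.
      - intros; apply gcont_cont_on; auto.
      - intros s _. rewrite vnorm_scale, Rabs_pos_eq by lra.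
        apply Rmult_le_compat_l; [lra|apply (Ztr_bound n Lam P K Rad HR HPb)]. }
    assert (vnorm n (u 0) = vnorm n v0) by (apply vnorm_ext; auto).
    pose proof (vnorm_tri n (u t) (u 0) vzero). rewrite !vsub_zero_r in *.
    assert (eps * K * Rabs t <= Rad).
    { eapply Rle_trans; [|apply HT]. apply Rmult_le_compat_l; [nra|]. apply Rabs_le. lra. }
    lra. }
  exists (fun t => PhiL Lam (- t) (u t)). split; [|split].
  - intros j Hj. rewrite Ropp_0, Phi_zero. auto.
  - replace (fun t => PhiL Lam (- t) (u t)) with (fun t => PhiL (fun j => - Lam j) t (u t))
      by (apply functional_extensionality; intros; apply Phi_neg).
    apply cont_on_Phi, gcont_cont_on; auto.
  - intros t Ht. apply slow_to_fast. specialize (Hud t). unfold Ztr, Yf in Hud |- *.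
    rewrite retract_in in Hud; auto. rewrite vnorm_Phi. apply Hub; auto.
Qed.

Section EffectiveSolution.
Variables (n : nat) (Lam : nat -> R) (P : (nat -> Cx) -> nat -> Cx) (X : R -> R)
  (v0 : nat -> Cx) (Rad : R) (a0 : R -> nat -> Cx).
Hypotheses (HXmono : forall r s, 0 <= r -> r <= s -> X r <= X s)
  (HPbd : forall r, 0 <= r -> forall v, vnorm n v <= r -> vnorm n (P v) <= X r)
  (HPlip : forall r, 0 <= r -> forall u v, vnorm n u <= r -> vnorm n v <= r ->
             vnorm n (vsub (P u) (P v)) <= X r * vnorm n (vsub u v))
  (Hv0 : vnorm n v0 = Rad) (HR : 0 < Rad) (HX2R : 0 < X (2 * Rad))
  (Ha0 : solves_effective n Lam P v0 (Rad / X (2 * Rad)) a0).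

Let K := X (2 * Rad).
Let th := Rad / K.

Lemma th_pos : 0 < th.
Proof. apply Rdiv_lt_0_compat; auto. Qed.

Lemma th_K : th * K = Rad.
Proof. unfold th. field. apply Rgt_not_eq, HX2R. Qed.

Lemma P_bound x : vnorm n x <= 2 * Rad -> vnorm n (P x) <= K.
Proof. intros. apply HPbd; auto; lra. Qed.

Lemma P_lip x y : vnorm n x <= 2 * Rad -> vnorm n y <= 2 * Rad ->
  vnorm n (vsub (P x) (P y)) <= K * vnorm n (vsub x y).
Proof. intros. apply HPlip; auto; lra. Qed.

Lemma Y_bound_X t x : vnorm n (Yf Lam P t x) <= X (vnorm n x).
Proof.
  unfold Yf. rewrite vnorm_Phi, <- (vnorm_Phi n Lam (- t) x).
  apply HPbd; [apply vnorm_nonneg|lra].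
Qed.

Definition W (tau : R) : nat -> Cx :=
  epsilon (inhabits vzero) (fun w => is_resonant_avg n Lam P (a0 tau) w /\ deriv_at n a0 tau w).

Lemma W_spec tau : - th < tau < th ->
  is_resonant_avg n Lam P (a0 tau) (W tau) /\ deriv_at n a0 tau (W tau).
Proof. intros Ht. unfold W. apply epsilon_spec. apply Ha0. auto. Qed.

Lemma W_le_X tau : - th < tau < th -> vnorm n (W tau) <= X (vnorm n (a0 tau)).
Proof.
  intros Ht. destruct (resonant_avg_primitive n Lam P _ _ (proj1 (W_spec tau Ht))) as [G [G0 [Gd Gm]]].
  apply (mean_le_bound n G (fun t => Yf Lam P t (a0 tau))); auto. intros; apply Y_bound_X.
Qed.

Lemma a0_cont : cont_on n a0 (- th) th.
Proof. apply Ha0. Qed.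

Lemma a0_bound tau : - th <= tau <= th -> vnorm n (a0 tau) <= 2 * Rad.
Proof.
  apply (stay_bounded_sym n X 1 th Rad HXmono (Rlt_le _ _ HX2R) ltac:(lra) (Rlt_le _ _ th_pos) HR
           ltac:(rewrite Rmult_1_l; fold K; rewrite th_K; lra) a0 W a0_cont).
  - intros; apply W_spec; auto.
  - intros; rewrite Rmult_1_l; apply W_le_X; auto.
  - rewrite <- Hv0. right. apply vnorm_ext. apply Ha0.
Qed.

Lemma W_bound tau : - th < tau < th -> vnorm n (W tau) <= K.
Proof.
  intros Ht. eapply Rle_trans; [apply W_le_X; auto|].
  apply HXmono; [apply vnorm_nonneg|apply a0_bound; lra].
Qed.

Lemma W_lip tau sig : - th < tau < th -> - th < sig < th ->
  vnorm n (vsub (W tau) (W sig)) <= K * vnorm n (vsub (a0 tau) (a0 sig)).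
Proof.
  intros Ht Hs.
  destruct (resonant_avg_primitive n Lam P _ _ (proj1 (W_spec tau Ht))) as [G [G0 [Gd Gm]]].
  destruct (resonant_avg_primitive n Lam P _ _ (proj1 (W_spec sig Hs))) as [G' [G0' [Gd' Gm']]].
  apply (mean_le_bound n (fun t => vsub (G t) (G' t))
           (fun t => vsub (Yf Lam P t (a0 tau)) (Yf Lam P t (a0 sig)))).
  - intros i Hi. unfold vsub. rewrite G0, G0' by auto. unfold Csub, C0; simpl; f_equal; ring.
  - intros t. apply deriv_vsub; auto.
  - intros t _. apply (Y_lip n Lam P K Rad P_lip); apply a0_bound; lra.
  - apply has_mean_sub; auto.
Qed.

Lemma forward_tracking eta : 0 < eta -> exists delta, 0 < delta /\ forall eps, 0 < eps < delta ->
  forall a : R -> nat -> Cx, cont_on n a 0 (th / eps) ->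
  (forall t, 0 < t < th / eps -> deriv_at n a t (vscale eps (Yf Lam P t (a t)))) ->
  (forall t, 0 <= t <= th / eps -> vnorm n (a t) <= 2 * Rad) ->
  vnorm n (vsub (a 0) (a0 0)) = 0 ->
  forall t, 0 <= t <= th / eps -> vnorm n (vsub (a t) (a0 (eps * t))) <= eta.
Proof.
  pose proof th_pos.
  apply (avg_core n (Yf Lam P) a0 W K Rad th HX2R th_pos
           (Y_bound n Lam P K Rad P_bound) (Y_lip n Lam P K Rad P_lip)).
  - apply (cont_on_sub n a0 (- th) th); [lra|lra|apply a0_cont].
  - intros; apply W_spec; lra.
  - intros; apply a0_bound; lra.
  - intros; apply W_bound; lra.
  - intros; apply W_lip; lra.
  - intros tau Ht. apply resonant_avg_primitive, W_spec. lra.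
Qed.

(* Backward in time: the reflected curve [s |-> a0 (- s)] solves the
   averaged equation of the reflected field [-Y(-s, .)], whose means are
   the backward means of [Y]. *)
Lemma backward_tracking eta : 0 < eta -> exists delta, 0 < delta /\ forall eps, 0 < eps < delta ->
  forall a : R -> nat -> Cx, cont_on n a 0 (th / eps) ->
  (forall t, 0 < t < th / eps -> deriv_at n a t (vscale eps (vscale (-1) (Yf Lam P (- t) (a t))))) ->
  (forall t, 0 <= t <= th / eps -> vnorm n (a t) <= 2 * Rad) ->
  vnorm n (vsub (a 0) (a0 0)) = 0 ->
  forall t, 0 <= t <= th / eps -> vnorm n (vsub (a t) (a0 (- (eps * t)))) <= eta.
Proof.
  intros Heta.
  destruct (avg_core n (fun s x => vscale (-1) (Yf Lam P (- s) x)) (fun sig => a0 (- sig))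
              (fun sig => vscale (-1) (W (- sig))) K Rad th HX2R th_pos) with (eta := eta)
    as [delta [Hdelta Hcore]]; auto.
  - intros t x Hx. rewrite vnorm_neg. apply (Y_bound n Lam P K Rad P_bound); auto.
  - intros t x y Hx Hy.
    replace (vsub (vscale (-1) (Yf Lam P (- t) x)) (vscale (-1) (Yf Lam P (- t) y)))
      with (vscale (-1) (vsub (Yf Lam P (- t) x) (Yf Lam P (- t) y))) by vring.
    rewrite vnorm_neg. apply (Y_lip n Lam P K Rad P_lip); auto.
  - apply cont_on_refl_sym; [pose proof th_pos; lra|apply a0_cont].
  - intros tau Ht. apply deriv_refl. apply W_spec. lra.
  - intros tau Ht. apply a0_bound. lra.
  - intros tau Ht. rewrite vnorm_neg. apply W_bound. lra.
  - intros tau sig Ht Hs.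
    replace (vsub (vscale (-1) (W (- tau))) (vscale (-1) (W (- sig))))
      with (vscale (-1) (vsub (W (- tau)) (W (- sig)))) by vring.
    rewrite vnorm_neg. apply W_lip; lra.
  - intros tau Ht.
    destruct (resonant_avg_primitive n Lam P _ _ (proj1 (W_spec (- tau) ltac:(lra)))) as [G HG].
    exists (fun t => G (- t)). destruct HG as [G0 [Gd Gm]]. split; [|split].
    + intros i Hi. rewrite Ropp_0. auto.
    + intros t. apply deriv_refl. apply Gd.
    + apply (backward_mean n Lam P K Rad HX2R HR P_bound P_lip (a0 (- tau))); [apply a0_bound; lra|].
      split; [|split]; auto.
  - exists delta. split; auto. intros eps Heps a Hac Had Hab Ha. apply Hcore; auto.
    rewrite Ropp_0. auto.
Qed.

Lemma slow_solution_bound eps (v : R -> nat -> Cx) : 0 < eps ->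
  solves_eps n Lam P eps v0 (/ eps * th) v ->
  forall s, - (/ eps * th) <= s <= / eps * th -> vnorm n (PhiL Lam s (v s)) <= 2 * Rad.
Proof.
  intros Heps [Hv0' [Hvc Hvd]].
  assert (HT : 0 <= / eps * th) by (pose proof th_pos; apply Rmult_le_pos; [left; apply Rinv_0_lt_compat|]; lra).
  apply (stay_bounded_sym n X eps (/ eps * th) Rad HXmono (Rlt_le _ _ HX2R) ltac:(lra) HT HR
           ltac:(replace (eps * (/ eps * th) * X (2 * Rad)) with (th * K) by (unfold K; field; lra);
                 rewrite th_K; lra)
           (fun s => PhiL Lam s (v s)) (fun s => vscale eps (Yf Lam P s (PhiL Lam s (v s))))).
  - apply cont_on_Phi; auto.
  - intros; apply fast_to_slow, Hvd; auto.
  - intros s _. rewrite vnorm_scale, Rabs_pos_eq by lra. apply Rmult_le_compat_l; [lra|apply Y_bound_X].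
  - cbv beta. rewrite vnorm_Phi, <- Hv0. right. apply vnorm_ext. auto.
Qed.

Lemma tracking eta : 0 < eta -> exists delta, 0 < delta /\ forall eps, 0 < eps < delta ->
  forall v, solves_eps n Lam P eps v0 (/ eps * th) v ->
  forall t, Rabs t <= / eps * th -> vnorm n (vsub (PhiL Lam t (v t)) (a0 (eps * t))) <= eta.
Proof.
  intros Heta.
  destruct (forward_tracking eta Heta) as [d1 [Hd1 Hfwd]].
  destruct (backward_tracking eta Heta) as [d2 [Hd2 Hbwd]].
  exists (Rmin d1 d2). split; [apply Rmin_pos; auto|].
  intros eps [Heps Hepsd] v Hv t Ht. pose proof (Rmin_l d1 d2). pose proof (Rmin_r d1 d2).
  pose proof (slow_solution_bound eps v Heps Hv) as Hab. destruct Hv as [Hv0' [Hvc Hvd]].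
  set (a := fun s => PhiL Lam s (v s)) in *.
  assert (HTe : th / eps = / eps * th) by (unfold Rdiv; ring).
  assert (Hac : cont_on n a (- (/ eps * th)) (/ eps * th)) by (apply cont_on_Phi; auto).
  assert (Had : forall s, - (/ eps * th) < s < / eps * th -> deriv_at n a s (vscale eps (Yf Lam P s (a s))))
    by (intros; apply fast_to_slow, Hvd; auto).
  assert (Hstart : vnorm n (vsub (a 0) (a0 0)) = 0).
  { transitivity (vnorm n vzero); [|apply vnorm_zero]. apply vnorm_ext. intros i Hi.
    unfold vsub, a. rewrite Phi_zero, Hv0' by auto. destruct Ha0 as [Ha00 _]. rewrite Ha00 by auto.
    unfold vzero, Csub, C0. destruct (v0 i); simpl; f_equal; ring. }
  assert (HT : 0 <= / eps * th) by (pose proof th_pos; apply Rmult_le_pos; [left; apply Rinv_0_lt_compat|]; lra).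
  apply Rabs_le_between in Ht. destruct (Rle_dec 0 t).
  - apply (Hfwd eps ltac:(lra) a); rewrite ?HTe.
    + apply (cont_on_sub n a (- (/ eps * th)) (/ eps * th)); auto; lra.
    + intros; apply Had; lra.
    + intros; apply Hab; lra.
    + auto.
    + lra.
  - replace t with (- - t) by ring. replace (eps * - - t) with (- (eps * - t)) by ring.
    apply (Hbwd eps ltac:(lra) (fun s => a (- s))); rewrite ?HTe.
    + apply cont_on_refl_sym; auto.
    + intros s Hs. eapply deriv_at_ext_d; [|apply deriv_refl, Had; lra].
      intros i Hi. unfold vscale, Cscale. apply injective_projections; cbn [fst snd]; ring.
    + intros s Hs. apply Hab. lra.
    + rewrite Ropp_0. auto.
    + lra.
Qed.

End EffectiveSolution.

Theorem corollary4p1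
  (n : nat) (Lam : nat -> R) (P : (nat -> Cx) -> (nat -> Cx)) (X : R -> R)
  (v0 : nat -> Cx) (Rad : R) (a0 : R -> nat -> Cx)
  (HLam : forall j, (j < n)%nat -> Lam j <> 0)
  (HX : admissible_X X)
  (HP : Lip_X n X P)
  (Hv0 : vnorm n v0 = Rad) (HR : 0 < Rad)
  (HX2R : 0 < X (2 * Rad))
  (Ha0 : solves_effective n Lam P v0 (Rad / X (2 * Rad)) a0) :
  forall j, (j < n)%nat ->
  forall eta, 0 < eta -> exists delta, 0 < delta /\
    forall eps, 0 < eps < delta ->
      (exists v, solves_eps n Lam P eps v0 (/ eps * (Rad / X (2 * Rad))) v) /\
      (forall v, solves_eps n Lam P eps v0 (/ eps * (Rad / X (2 * Rad))) v ->
         forall t, Rabs t <= / eps * (Rad / X (2 * Rad)) ->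
           Rabs (Cnorm (v t j) - Cnorm (a0 (eps * t) j)) <= eta).
Proof.
  intros j Hj eta Heta.
  destruct HX as [_ [HXmono _]]. destruct HP as [_ [HPbd HPlip]].
  destruct (tracking n Lam P X v0 Rad a0 HXmono HPbd HPlip Hv0 HR HX2R Ha0 eta Heta)
    as [delta [Hdelta Htrack]].
  exists delta. split; auto. intros eps Heps. split.
  - (* Existence up to time [th / eps], since [eps K (th / eps) = Rad]. *)
    apply (exists_solution n Lam P (X (2 * Rad)) Rad eps v0); try lra.
    + intros. apply HPbd; auto; lra.
    + intros. apply HPlip; auto; lra.
    + right. field. lra.
  - (* The rotation [Phi_{Lambda t}] preserves the modulus of each component. *)
    intros v Hv t Ht.
    replace (Cnorm (v t j)) with (Cnorm (PhiL Lam t (v t) j)) by (unfold PhiL; apply Cnorm_expi_mul).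
    eapply Rle_trans; [apply Cnorm_rev|].
    eapply Rle_trans; [apply (Cnorm_le_vnorm n (vsub (PhiL Lam t (v t)) (a0 (eps * t))) j Hj)|].
    apply Htrack; auto.
Qed.
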